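(* Let $0\le B\le A\in B(H)$. Then for every $\xi\in\operatorname{Adm}(B)$, $$\operatorname{tr}\big((A-I)_+\big)\ \ge\ \sum\{\xi_j-1 : \xi_j>1\}.$$
   Context: $\operatorname{Adm}(B)$ is the set of sequences $\xi\in\ell^\infty_+$ such that $B=\sum_j\xi_jP_j$ for some rank-one projections $P_j$ (series converging strongly if infinite). $(A-I)_+$ is the positive part of the selfadjoint operator $A-I$, and $\operatorname{tr}$ is the standard trace. *)

From Stdlib Require Import Reals Lra List.
Open Scope R_scope.
Set Implicit Arguments.

Record Cx := mkC { Re : R ; Im : R }.
Definition C0 : Cx := mkC 0 0.
Definition C1 : Cx := mkC 1 0.
Definition RC (r : R) : Cx := mkC r 0.
Definition Cadd (a b : Cx) : Cx := mkC (Re a + Re b) (Im a + Im b).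
Definition Cmul (a b : Cx) : Cx :=
  mkC (Re a * Re b - Im a * Im b) (Re a * Im b + Im a * Re b).
Definition Cconj (a : Cx) : Cx := mkC (Re a) (- Im a).

Record HOps (H : Type) := {
  vadd  : H -> H -> H ;
  vzero : H ;
  vopp  : H -> H ;
  vscal : Cx -> H -> H ;
  ip    : H -> H -> Cx   (* linear in the 1st, conjugate-linear in the 2nd argument *)
}.

Section HilbertDefs.
Variable H : Type.
Variable o : HOps H.

Definition vsub (x y : H) : H := vadd o x (vopp o y).
Definition norm (x : H) : R := sqrt (Re (ip o x x)).

Definition cv_to (u : nat -> H) (l : H) : Prop :=
  forall eps, eps > 0 -> exists N, forall n, (n >= N)%nat -> norm (vsub (u n) l) < eps.
Definition cauchy (u : nat -> H) : Prop :=
  forall eps, eps > 0 -> exists N, forall n m, (n >= N)%nat -> (m >= N)%nat ->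
    norm (vsub (u n) (u m)) < eps.

Record is_CHilbert : Prop := {
  vadd_assoc : forall x y z, vadd o x (vadd o y z) = vadd o (vadd o x y) z ;
  vadd_comm  : forall x y, vadd o x y = vadd o y x ;
  vadd_0     : forall x, vadd o x (vzero o) = x ;
  vadd_opp   : forall x, vadd o x (vopp o x) = vzero o ;
  vscal_1    : forall x, vscal o C1 x = x ;
  vscal_assoc : forall a b x, vscal o a (vscal o b x) = vscal o (Cmul a b) x ;
  vscal_distr_v : forall a x y, vscal o a (vadd o x y) = vadd o (vscal o a x) (vscal o a y) ;
  vscal_distr_s : forall a b x, vscal o (Cadd a b) x = vadd o (vscal o a x) (vscal o b x) ;
  ip_add_l  : forall x y z, ip o (vadd o x y) z = Cadd (ip o x z) (ip o y z) ;
  ip_scal_l : forall a x y, ip o (vscal o a x) y = Cmul a (ip o x y) ;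
  ip_conj   : forall x y, ip o y x = Cconj (ip o x y) ;
  ip_pos    : forall x, 0 <= Re (ip o x x) ;
  ip_def    : forall x, Re (ip o x x) = 0 -> x = vzero o ;
  complete  : forall u, cauchy u -> exists l, cv_to u l
}.

Definition linear_op (T : H -> H) : Prop :=
  (forall x y, T (vadd o x y) = vadd o (T x) (T y)) /\
  (forall a x, T (vscal o a x) = vscal o a (T x)).

Definition bounded_op (T : H -> H) : Prop :=
  linear_op T /\ exists M, forall x, norm (T x) <= M * norm x.

Definition opsub (S T : H -> H) : H -> H := fun x => vsub (S x) (T x).
Definition idop : H -> H := fun x => x.
Definition zeroop : H -> H := fun _ => vzero o.

Definition positive_op (T : H -> H) : Prop :=
  forall x, Im (ip o (T x) x) = 0 /\ 0 <= Re (ip o (T x) x).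

Definition op_le (S T : H -> H) : Prop := positive_op (opsub T S).

Definition rank_one_proj (P : H -> H) : Prop :=
  exists e, norm e = 1 /\ forall x, P x = vscal o (ip o x e) e.

Definition op_sqrt (S Y : H -> H) : Prop :=
  bounded_op S /\ positive_op S /\ forall x, S (S x) = Y x.

(* P = X_+ = (X + |X|)/2 with |X| = (X^2)^{1/2} *)
Definition pos_part (X P : H -> H) : Prop :=
  exists S, op_sqrt S (fun x => X (X x)) /\
    forall x, P x = vscal o (RC (1/2)) (vadd o (X x) (S x)).

Definition onb (I : Type) (e : I -> H) : Prop :=
  (forall i, ip o (e i) (e i) = C1) /\
  (forall i j, i <> j -> ip o (e i) (e j) = C0) /\
  (forall x, (forall i, ip o x (e i) = C0) -> x = vzero o).

(* tr T >= s  (in [0,+oo]) where tr T = sum_i <T e_i, e_i> over an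
   orthonormal basis (a sum of nonnegative terms for T >= 0, i.e. the sup
   of its finite partial sums); required for every orthonormal basis. *)
Definition trace_ge (T : H -> H) (s : R) : Prop :=
  forall (I : Type) (e : I -> H), onb e ->
    forall eps, eps > 0 -> exists l : list I, NoDup l /\
      s - eps < fold_right (fun i acc => Re (ip o (T (e i)) (e i)) + acc) 0 l.

(* index set: {0,...,n-1} if len = Some n, all of nat if len = None *)
Definition in_idx (len : option nat) (j : nat) : Prop :=
  match len with Some n => (j < n)%nat | None => True end.
Definition prefix_ok (len : option nat) (N : nat) : Prop :=
  match len with Some n => (N <= n)%nat | None => True end.

Fixpoint psum (xi : nat -> R) (Pj : nat -> H -> H) (n : nat) (x : H) : H :=
  match n with
  | O => vzero o
  | S k => vadd o (psum xi Pj k x) (vscal o (RC (xi k)) (Pj k x))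
  end.

Definition admissible (B : H -> H) (len : option nat) (xi : nat -> R) : Prop :=
  (forall j, in_idx len j -> 0 <= xi j) /\
  (exists M, forall j, in_idx len j -> xi j <= M) /\
  exists Pj : nat -> H -> H,
    (forall j, in_idx len j -> rank_one_proj (Pj j)) /\
    match len with
    | Some n => forall x, B x = psum xi Pj n x
    | None => forall x, cv_to (fun N => psum xi Pj N x) (B x)
    end.

End HilbertDefs.

(* partial sums of  sum { xi_j - 1 : xi_j > 1 } *)
Fixpoint excess (xi : nat -> R) (N : nat) : R :=
  match N with
  | O => 0
  | S k => excess xi k + (if Rlt_dec 1 (xi k) then xi k - 1 else 0)
  end.

(* Let F = {j < N : xi_j > 1} and write B = sum_j xi_j <., g_j> g_j with unit
   vectors g_j.  Take an orthonormal basis h_1, ..., h_m of span {g_j : j in F},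
   so m <= |F|.  Since (A - I)_+ >= A - I >= B - I, each h satisfies
   <(A - I)_+ h, h> >= sum_(j in F) xi_j |<h, g_j>|^2 - 1, and summing over h
   gives sum_(j in F) xi_j - m >= sum_(j in F) (xi_j - 1).  The trace of a
   positive operator P, computed in any orthonormal basis, dominates
   sum_h <P h, h>: write P = W^2 and use Bessel and Parseval.  Finally
   X_+ = (X + |X|)/2 dominates both X and 0 because |X| >= X and |X| >= -X,
   which follows from |X|^2 = X^2 by an approximate-eigenvector argument. *)

From Pilot Require Import Defs.
From Stdlib Require Import Reals Lra Lia List Classical FunctionalExtensionality ClassicalEpsilon.
Open Scope R_scope.
Set Implicit Arguments.

Lemma Cx_eq (a b : Cx) : Re a = Re b -> Im a = Im b -> a = b.
Proof. destruct a, b; simpl; intros; subst; reflexivity. Qed.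

Definition Cnorm2 (z : Cx) : R := Re z * Re z + Im z * Im z.

Lemma Cnorm2_ge0 z : 0 <= Cnorm2 z.
Proof. unfold Cnorm2; nra. Qed.

Lemma Cnorm2_eq0 z : Cnorm2 z = 0 -> z = C0.
Proof. unfold Cnorm2; intros; apply Cx_eq; simpl; nra. Qed.

Lemma Re_sqr_le_Cnorm2 z : Re z * Re z <= Cnorm2 z.
Proof. unfold Cnorm2; nra. Qed.

Lemma Rle_eps_eq a b : (forall e, 0 < e -> Rabs (a - b) <= e) -> a = b.
Proof.
  intros Hs. destruct (Req_dec (a - b) 0) as [E|E]; [lra|].
  pose proof (Rabs_pos_lt _ E). specialize (Hs (Rabs (a - b) / 2)). lra.
Qed.

Lemma Cx_eps_eq (z w : Cx) :
  (forall e, 0 < e -> Rabs (Re z - Re w) <= e /\ Rabs (Im z - Im w) <= e) -> z = w.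
Proof. intro Hs; apply Cx_eq; apply Rle_eps_eq; intros e ep; apply Hs; auto. Qed.

Section InnerProduct.
Variable H : Type.
Variable o : HOps H.
Hypothesis hH : is_CHilbert o.

Notation ad := (vadd o).
Notation sc := (vscal o).
Notation z0 := (vzero o).
Notation op := (vopp o).
Notation ipo := (ip o).

Lemma ipDl x y z : ipo (ad x y) z = Cadd (ipo x z) (ipo y z).
Proof. apply (ip_add_l hH). Qed.
Lemma ipZl a x y : ipo (sc a x) y = Cmul a (ipo x y).
Proof. apply (ip_scal_l hH). Qed.
Lemma ipC x y : ipo y x = Cconj (ipo x y).
Proof. apply (ip_conj hH). Qed.

Lemma ipDr x y z : ipo x (ad y z) = Cadd (ipo x y) (ipo x z).
Proof. rewrite ipC, ipDl, (ipC y x), (ipC z x). apply Cx_eq; simpl; ring. Qed.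
Lemma ipZr a x y : ipo x (sc a y) = Cmul (Cconj a) (ipo x y).
Proof. rewrite ipC, ipZl, (ipC y x). apply Cx_eq; simpl; ring. Qed.

Lemma ip0l y : ipo z0 y = C0.
Proof.
  assert (E : ipo z0 y = Cadd (ipo z0 y) (ipo z0 y))
    by (rewrite <- ipDl, (vadd_0 hH); reflexivity).
  destruct (ipo z0 y) as [a b]; injection E; intros; apply Cx_eq; simpl; lra.
Qed.
Lemma ip0r y : ipo y z0 = C0.
Proof. rewrite ipC, ip0l. apply Cx_eq; simpl; lra. Qed.

Lemma add0v x : ad z0 x = x.
Proof. rewrite (vadd_comm hH). apply (vadd_0 hH). Qed.

Lemma ipNl x y : ipo (op x) y = Cmul (RC (-1)) (ipo x y).
Proof.
  assert (E : Cadd (ipo x y) (ipo (op x) y) = C0)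
    by (rewrite <- ipDl, (vadd_opp hH); apply ip0l).
  destruct (ipo (op x) y) as [a b], (ipo x y) as [c d].
  injection E; intros; apply Cx_eq; simpl; lra.
Qed.
Lemma ipNr x y : ipo x (op y) = Cmul (RC (-1)) (ipo x y).
Proof. rewrite ipC, ipNl, (ipC y x). apply Cx_eq; simpl; ring. Qed.

Lemma ipBl x y z : ipo (vsub o x y) z = Cadd (ipo x z) (Cmul (RC (-1)) (ipo y z)).
Proof. unfold vsub. rewrite ipDl, ipNl. reflexivity. Qed.
Lemma ipBr x y z : ipo z (vsub o x y) = Cadd (ipo z x) (Cmul (RC (-1)) (ipo z y)).
Proof. unfold vsub. rewrite ipDr, ipNr. reflexivity. Qed.

Lemma subv_eq0 x y : vsub o x y = z0 -> x = y.
Proof.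
  unfold vsub; intro Z.
  rewrite <- (vadd_0 hH x), <- (vadd_opp hH y), (vadd_comm hH y (op y)),
    (vadd_assoc hH), Z.
  apply add0v.
Qed.

Lemma vec_ext x y : (forall z, ipo x z = ipo y z) -> x = y.
Proof.
  intros Hz. apply subv_eq0, (ip_def hH).
  unfold vsub at 1. rewrite ipDl, ipNl, Hz.
  destruct (ipo y (vsub o x y)); simpl; ring.
Qed.

End InnerProduct.

(* Proves an identity between vector expressions by testing it against an
   arbitrary vector and normalising the resulting complex numbers. *)
Ltac vec_ring hH :=
  apply (vec_ext hH); intro;
  repeat first [ rewrite (ipDl hH) | rewrite (ipZl hH) | rewrite (ipNl hH)
               | rewrite (ip0l hH) | rewrite (ipBl hH) ];
  apply Cx_eq; simpl; ring.

Lemma quad_nonneg_discr a b c :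
  (forall t, 0 <= a + 2 * t * b + t * t * b * c) -> 0 <= b -> 0 <= c -> b <= a * c.
Proof.
  intros Ht Hb Hc.
  destruct (Rle_lt_or_eq_dec 0 c Hc) as [cp|c0].
  - specialize (Ht (- / c)).
    replace (a + 2 * - / c * b + - / c * - / c * b * c) with (a - b / c) in Ht
      by (field; lra).
    apply (Rmult_le_compat_r c) in Ht; [|lra].
    unfold Rdiv in Ht. rewrite Rmult_minus_distr_r, Rmult_assoc, Rinv_l in Ht; lra.
  - subst c. destruct (Rle_lt_or_eq_dec 0 b Hb) as [bp|b0]; [|subst; lra].
    specialize (Ht (- (a + 1) / (2 * b))).
    replace (a + 2 * (- (a + 1) / (2 * b)) * b + - (a + 1) / (2 * b) * (- (a + 1) / (2 * b)) * b * 0)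
      with (-1) in Ht by (field; lra).
    lra.
Qed.

Lemma sqrt_le_mul a b c : 0 <= a -> 0 <= b -> c * c <= a * b -> c <= sqrt a * sqrt b.
Proof.
  intros Ha Hb Hc. rewrite <- sqrt_mult by auto.
  destruct (Rle_or_lt c 0). { pose proof (sqrt_pos (a * b)). lra. }
  rewrite <- (sqrt_square c) by lra. apply sqrt_le_1_alt. lra.
Qed.

Lemma sqrt_lt_sqr v e : 0 < e -> v < e * e -> sqrt v < e.
Proof.
  intros ep Hv. destruct (Rle_or_lt v 0).
  - rewrite sqrt_neg_0 by lra. lra.
  - rewrite <- (sqrt_square e) by lra. apply sqrt_lt_1_alt. lra.
Qed.

Section Operators.
Variable H : Type.
Variable o : HOps H.
Hypothesis hH : is_CHilbert o.

Notation ad := (vadd o).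
Notation sc := (vscal o).
Notation z0 := (vzero o).
Notation op := (vopp o).
Notation ipo := (ip o).

Definition sqnorm x := Re (ipo x x).

Lemma sqnorm_ge0 x : 0 <= sqnorm x.
Proof. apply (ip_pos hH). Qed.

Lemma Im_ip_diag x : Im (ipo x x) = 0.
Proof. pose proof (ipC hH x x) as E. destruct (ipo x x) as [a b]. injection E. simpl. lra. Qed.

Lemma Re_ipC x y : Re (ipo y x) = Re (ipo x y).
Proof. rewrite (ipC hH). reflexivity. Qed.
Lemma Im_ipC x y : Im (ipo y x) = - Im (ipo x y).
Proof. rewrite (ipC hH). reflexivity. Qed.

Lemma norm_ge0 x : 0 <= norm o x.
Proof. apply sqrt_pos. Qed.

Lemma norm_sqr x : norm o x * norm o x = sqnorm x.
Proof. apply sqrt_sqrt, sqnorm_ge0. Qed.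

Lemma sqnorm_eq1_norm x : sqnorm x = 1 -> norm o x = 1.
Proof. intro U. unfold norm. fold (sqnorm x). rewrite U. apply sqrt_1. Qed.

Lemma sqnorm_eq0 x : sqnorm x = 0 -> x = z0.
Proof. apply (ip_def hH). Qed.

Definition hermitian (T : H -> H) := forall x y, ipo (T x) y = ipo x (T y).

Lemma linearD T x y : linear_op o T -> T (ad x y) = ad (T x) (T y).
Proof. intros [L _]. apply L. Qed.
Lemma linearZ T a x : linear_op o T -> T (sc a x) = sc a (T x).
Proof. intros [_ L]. apply L. Qed.
Lemma linear0 T : linear_op o T -> T z0 = z0.
Proof.
  intros L. apply (vec_ext hH). intro z.
  assert (E : ipo (T z0) z = Cadd (ipo (T z0) z) (ipo (T z0) z))
    by (rewrite <- (ipDl hH), <- linearD, (vadd_0 hH) by exact L; reflexivity).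
  rewrite (ip0l hH). destruct (ipo (T z0) z) as [a b].
  injection E; intros; apply Cx_eq; simpl; lra.
Qed.
Lemma linearN T x : linear_op o T -> T (op x) = op (T x).
Proof.
  intros L. replace (op x) with (sc (RC (-1)) x) by vec_ring hH.
  rewrite linearZ by exact L. vec_ring hH.
Qed.
Lemma linearB T x y : linear_op o T -> T (vsub o x y) = vsub o (T x) (T y).
Proof. intros L. unfold vsub. rewrite linearD, linearN by auto. reflexivity. Qed.

Lemma hermitian_ip_real T x : hermitian T -> Im (ipo (T x) x) = 0.
Proof.
  intros Hm. pose proof (Hm x x) as E. rewrite (ipC hH (T x) x) in E.
  destruct (ipo (T x) x) as [a b]. injection E; simpl; lra.
Qed.

(* Polarisation, with x + y and x + i y. *)
Lemma positive_hermitian T : linear_op o T -> positive_op o T -> hermitian T.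
Proof.
  intros L P x y.
  pose proof (proj1 (P (ad x y))) as I1.
  pose proof (proj1 (P (ad x (sc (mkC 0 1) y)))) as I2.
  pose proof (proj1 (P x)) as Ix. pose proof (proj1 (P y)) as Iy.
  rewrite linearD, linearZ in I2 by auto. rewrite linearD in I1 by auto.
  rewrite !(ipDl hH), !(ipDr hH) in I1.
  rewrite !(ipDl hH), !(ipDr hH), !(ipZl hH), !(ipZr hH) in I2.
  rewrite (ipC hH (T y) x).
  destruct (ipo (T x) y) as [a1 a2], (ipo (T y) x) as [b1 b2].
  simpl in *. apply Cx_eq; simpl; lra.
Qed.

Lemma positive_CauchySchwarz T x y : linear_op o T -> positive_op o T ->
  Cnorm2 (ipo (T x) y) <= Re (ipo (T x) x) * Re (ipo (T y) y).
Proof.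
  intros L P. pose proof (positive_hermitian L P) as Hm.
  set (a := ipo (T x) y).
  apply quad_nonneg_discr; [| apply Cnorm2_ge0 | apply (proj2 (P y))].
  intro t. pose proof (proj2 (P (ad x (sc (Cmul (RC t) a) y)))) as Q.
  rewrite linearD, linearZ in Q by auto.
  rewrite !(ipDl hH), !(ipDr hH), !(ipZl hH), !(ipZr hH) in Q.
  rewrite (Hm y x), (ipC hH (T x) y) in Q. fold a in Q.
  pose proof (proj1 (P y)) as Iy.
  destruct (ipo (T y) y) as [q1 q2], (ipo (T x) x) as [p1 p2].
  unfold Cnorm2. destruct a as [a1 a2]. simpl in *. subst q2. nra.
Qed.

Lemma CauchySchwarz x y : Cnorm2 (ipo x y) <= sqnorm x * sqnorm y.
Proof.
  apply (positive_CauchySchwarz (T := fun x => x)); [split; reflexivity|].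
  intro z. split; [apply Im_ip_diag | apply sqnorm_ge0].
Qed.

Lemma Re_ip_le_norm x y : Re (ipo x y) <= norm o x * norm o y.
Proof.
  apply sqrt_le_mul; try apply sqnorm_ge0.
  eapply Rle_trans; [apply Re_sqr_le_Cnorm2 | apply CauchySchwarz].
Qed.

Lemma normN x : norm o (op x) = norm o x.
Proof. unfold norm. rewrite (ipNl hH), (ipNr hH). simpl. f_equal. ring. Qed.

Lemma Rabs_Re_ip_le_norm x y : Rabs (Re (ipo x y)) <= norm o x * norm o y.
Proof.
  unfold Rabs. destruct (Rcase_abs _); [|apply Re_ip_le_norm].
  replace (- Re (ipo x y)) with (Re (ipo (op x) y)) by (rewrite (ipNl hH); simpl; ring).
  rewrite <- (normN x). apply Re_ip_le_norm.
Qed.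

Lemma Rabs_Im_ip_le_norm x y : Rabs (Im (ipo x y)) <= norm o x * norm o y.
Proof.
  pose proof (CauchySchwarz x y) as C. unfold Cnorm2 in C.
  rewrite <- sqrt_Rsqr_abs. unfold Rsqr, norm. rewrite <- sqrt_mult by apply sqnorm_ge0.
  apply sqrt_le_1_alt. fold (sqnorm x) (sqnorm y). nra.
Qed.

Lemma sqnormD x y : sqnorm (ad x y) = sqnorm x + sqnorm y + 2 * Re (ipo x y).
Proof. unfold sqnorm. rewrite (ipDl hH), !(ipDr hH). simpl. rewrite (Re_ipC x y). ring. Qed.

Lemma sqnormB x y : sqnorm (vsub o x y) = sqnorm x + sqnorm y - 2 * Re (ipo x y).
Proof. unfold sqnorm. rewrite (ipBl hH), !(ipBr hH). simpl. rewrite (Re_ipC x y). ring. Qed.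

Lemma sqnormZ a x : sqnorm (sc a x) = Cnorm2 a * sqnorm x.
Proof. unfold sqnorm, Cnorm2. rewrite (ipZl hH), (ipZr hH). simpl. rewrite Im_ip_diag. ring. Qed.

Lemma normZ a x : norm o (sc a x) = sqrt (Cnorm2 a) * norm o x.
Proof. unfold norm. fold (sqnorm (sc a x)). rewrite sqnormZ. apply sqrt_mult; [apply Cnorm2_ge0 | apply sqnorm_ge0]. Qed.

Lemma normZ_real t x : norm o (sc (RC t) x) = Rabs t * norm o x.
Proof.
  rewrite normZ. unfold Cnorm2; simpl. rewrite Rmult_0_l, Rplus_0_r.
  rewrite <- sqrt_Rsqr_abs. reflexivity.
Qed.

Lemma normD_le x y : norm o (ad x y) <= norm o x + norm o y.
Proof.
  unfold norm at 1. fold (sqnorm (ad x y)). rewrite sqnormD.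
  pose proof (Re_ip_le_norm x y). pose proof (norm_sqr x). pose proof (norm_sqr y).
  pose proof (norm_ge0 x). pose proof (norm_ge0 y).
  rewrite <- (sqrt_square (norm o x + norm o y)) by lra.
  apply sqrt_le_1_alt. nra.
Qed.

Lemma normB_le x y : norm o (vsub o x y) <= norm o x + norm o y.
Proof. unfold vsub. rewrite <- (normN y). apply normD_le. Qed.

Lemma normB_sym x y : norm o (vsub o x y) = norm o (vsub o y x).
Proof.
  unfold norm. fold (sqnorm (vsub o x y)) (sqnorm (vsub o y x)). rewrite !sqnormB.
  rewrite (Re_ipC x y). f_equal. ring.
Qed.

Definition op_bound (T : H -> H) M := forall x, norm o (T x) <= M * norm o x.

Lemma op_bound_Rabs T M : op_bound T M -> op_bound T (Rabs M).
Proof.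
  intros B x. eapply Rle_trans; [apply B|].
  apply Rmult_le_compat_r; [apply norm_ge0 | apply Rle_abs].
Qed.

(* Cauchy-Schwarz for the semi-inner product <T.,.>, applied to x and T x. *)
Lemma positive_sqnorm_le T M x : linear_op o T -> positive_op o T -> op_bound T M ->
  sqnorm (T x) <= Rabs M * Re (ipo (T x) x).
Proof.
  intros L P B. apply op_bound_Rabs in B. set (M' := Rabs M) in *.
  assert (M0 : 0 <= M') by apply Rabs_pos.
  pose proof (positive_CauchySchwarz x (T x) L P) as C.
  replace (Cnorm2 (ipo (T x) (T x))) with (sqnorm (T x) * sqnorm (T x)) in C
    by (unfold Cnorm2, sqnorm; rewrite Im_ip_diag; ring).
  assert (C2 : Re (ipo (T (T x)) (T x)) <= M' * sqnorm (T x)).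
  { eapply Rle_trans; [apply Re_ip_le_norm|]. rewrite <- (norm_sqr (T x)).
    pose proof (B (T x)). pose proof (norm_ge0 (T x)). nra. }
  pose proof (proj2 (P x)) as Px. pose proof (sqnorm_ge0 (T x)) as N0.
  destruct (Rle_lt_or_eq_dec 0 _ N0) as [Np|Nz]; [|rewrite <- Nz; nra].
  apply Rmult_le_reg_r with (sqnorm (T x)); nra.
Qed.

End Operators.

Section NumericalRange.
Variable H : Type.
Variable o : HOps H.
Hypothesis hH : is_CHilbert o.

Notation sc := (vscal o).
Notation ipo := (ip o).
Notation sqnorm := (sqnorm o).

Variable D : H -> H.
Variable M : R.
Hypothesis DL : linear_op o D.
Hypothesis DH : hermitian o D.
Hypothesis DB : op_bound o D M.

Let form x := Re (ipo (D x) x).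

Lemma form_unit_normalize x : 0 < sqnorm x ->
  exists u, sqnorm u = 1 /\ form u = form x / sqnorm x.
Proof.
  intros Pn. exists (sc (RC (/ norm o x)) x).
  pose proof (norm_sqr hH x) as Nx. pose proof (norm_ge0 o x).
  assert (nP : 0 < norm o x) by nra.
  split.
  - rewrite (sqnormZ hH). unfold Cnorm2; simpl. rewrite <- Nx. field. lra.
  - unfold form. rewrite (linearZ _ _ DL), (ipZl hH), (ipZr hH). simpl.
    rewrite (hermitian_ip_real hH x DH), <- Nx. field. lra.
Qed.

Lemma form_unit_ge x : sqnorm x = 1 -> - Rabs M <= form x.
Proof.
  intros U. unfold form.
  pose proof (Rabs_Re_ip_le_norm hH (D x) x) as A1.
  pose proof (op_bound_Rabs DB x) as A2.
  rewrite (sqnorm_eq1_norm o x U) in *.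
  pose proof (Rle_abs (- Re (ipo (D x) x))) as A3. rewrite Rabs_Ropp in A3. lra.
Qed.

(* mu is the infimum of the numerical range of D over unit vectors. *)
Lemma numerical_range_inf_neg x0 : form x0 < 0 ->
  exists mu, mu < 0 /\ (forall y, mu * sqnorm y <= form y) /\
    forall d, 0 < d -> exists x, sqnorm x = 1 /\ form x < mu + d.
Proof.
  intros fx0.
  assert (nx0 : 0 < sqnorm x0).
  { destruct (Rle_lt_or_eq_dec _ _ (sqnorm_ge0 hH x0)) as [p|z]; auto.
    exfalso. rewrite (sqnorm_eq0 hH _ (eq_sym z)) in fx0.
    unfold form in fx0. rewrite (ip0r hH) in fx0. simpl in fx0. lra. }
  destruct (form_unit_normalize _ nx0) as [u0 [U0 Fu0]].
  assert (fu0 : form u0 < 0)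
    by (rewrite Fu0; apply Rdiv_neg_pos; auto).
  set (E := fun r => exists x, sqnorm x = 1 /\ r = - form x).
  assert (bE : bound E).
  { exists (Rabs M). intros r [x [U ->]]. pose proof (form_unit_ge _ U). lra. }
  destruct (completeness E bE (ex_intro _ (- form u0) (ex_intro _ u0 (conj U0 eq_refl))))
    as [L [Lub Lleast]].
  exists (- L). split; [|split].
  - assert (- form u0 <= L) by (apply Lub; exists u0; auto). lra.
  - intro y. destruct (Rle_lt_or_eq_dec _ _ (sqnorm_ge0 hH y)) as [p|z].
    + destruct (form_unit_normalize _ p) as [u [U Fu]].
      assert (- form u <= L) by (apply Lub; exists u; auto).
      rewrite Fu in H0.
      replace (form y) with (form y / sqnorm y * sqnorm y) by (field; lra). nra.
    + rewrite <- z, (sqnorm_eq0 hH _ (eq_sym z)). unfold form. rewrite (ip0r hH). simpl. lra.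
  - intros d dp. apply NNPP. intro Hn.
    assert (is_upper_bound E (L - d)).
    { intros r [x [U ->]]. apply Rnot_lt_le. intro Hc. apply Hn. exists x. split; auto. lra. }
    apply Lleast in H0. lra.
Qed.

(* D - mu >= 0 with <(D - mu) x, x> small, so (D - mu) x is small. *)
Lemma approx_eigenvector x0 : form x0 < 0 ->
  exists mu, mu < 0 /\ forall eta d, 0 < eta -> 0 < d ->
    exists x, sqnorm x = 1 /\ form x < mu + d /\ norm o (vsub o (D x) (sc (RC mu) x)) <= eta.
Proof.
  intros fx0. destruct (numerical_range_inf_neg x0 fx0) as [mu [mu_neg [mu_low mu_near]]].
  exists mu. split; auto. intros eta d etap dp.
  set (K := fun y => vsub o (D y) (sc (RC mu) y)).
  assert (KL : linear_op o K).
  { split; intros; unfold K.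
    - rewrite (linearD _ _ DL). vec_ring hH.
    - rewrite (linearZ _ _ DL). vec_ring hH. }
  assert (KP : positive_op o K).
  { intro y. unfold K. rewrite (ipBl hH), (ipZl hH). simpl.
    rewrite (hermitian_ip_real hH y DH), (Im_ip_diag hH).
    split; [ring|]. pose proof (mu_low y). unfold form, sqnorm in *. lra. }
  set (MK := Rabs M + Rabs mu).
  assert (KB : op_bound o K MK).
  { intro y. unfold K. eapply Rle_trans; [apply (normB_le hH)|].
    rewrite (normZ_real hH). pose proof (op_bound_Rabs DB y). unfold MK. lra. }
  assert (MKp : 0 <= Rabs MK) by apply Rabs_pos.
  set (d' := Rmin d (eta * eta / (Rabs MK + 1))).
  assert (d'p : 0 < d') by (apply Rmin_pos; [lra | apply Rdiv_lt_0_compat; nra]).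
  assert (d'2 : Rabs MK * d' <= eta * eta).
  { pose proof (Rmin_r d (eta * eta / (Rabs MK + 1))) as m2. fold d' in m2.
    apply Rle_trans with ((Rabs MK + 1) * d'); [nra|].
    apply Rmult_le_compat_l with (r := Rabs MK + 1) in m2; [|lra].
    replace ((Rabs MK + 1) * (eta * eta / (Rabs MK + 1))) with (eta * eta) in m2
      by (field; lra). exact m2. }
  destruct (mu_near d' d'p) as [x [Ux Fx]].
  exists x. split; [exact Ux|]. split.
  { pose proof (Rmin_l d (eta * eta / (Rabs MK + 1))). unfold d' in Fx. lra. }
  pose proof (positive_sqnorm_le hH x KL KP KB) as Kx.
  replace (Re (ipo (K x) x)) with (form x - mu) in Kx
    by (unfold K, form; rewrite (ipBl hH), (ipZl hH); simpl; unfold sqnorm in Ux;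
        rewrite Ux, (Im_ip_diag hH); ring).
  assert (0 <= form x - mu) by (pose proof (mu_low x); rewrite Ux in *; lra).
  assert (sqnorm (K x) <= eta * eta) by (apply Rle_trans with (Rabs MK * d'); nra).
  fold (K x). pose proof (norm_sqr hH (K x)). pose proof (norm_ge0 o (K x)). nra.
Qed.

End NumericalRange.

Section SquareRootDominates.
Variable H : Type.
Variable o : HOps H.
Hypothesis hH : is_CHilbert o.

Notation ad := (vadd o).
Notation sc := (vscal o).
Notation ipo := (ip o).
Notation sqnorm := (sqnorm o).

Variables S X : H -> H.
Variables MS MX : R.
Hypothesis SL : linear_op o S.
Hypothesis SP : positive_op o S.
Hypothesis SB : op_bound o S MS.
Hypothesis XL : linear_op o X.
Hypothesis XH : hermitian o X.
Hypothesis XB : op_bound o X MX.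
Hypothesis SX : forall x, S (S x) = X (X x).

Let D x := vsub o (S x) (X x).

Lemma defect_linear : linear_op o D.
Proof.
  split; intros; unfold D.
  - rewrite (linearD _ _ SL), (linearD _ _ XL). vec_ring hH.
  - rewrite (linearZ _ _ SL), (linearZ _ _ XL). vec_ring hH.
Qed.

Lemma defect_hermitian : hermitian o D.
Proof.
  intros x y. unfold D. rewrite (ipBl hH), (ipBr hH), XH, (positive_hermitian hH SL SP).
  reflexivity.
Qed.

Lemma defect_bound : op_bound o D (Rabs MS + Rabs MX).
Proof.
  intro x. unfold D. eapply Rle_trans; [apply (normB_le hH)|].
  pose proof (op_bound_Rabs SB x). pose proof (op_bound_Rabs XB x). lra.
Qed.

(* S D + D X = S^2 - X^2 = 0; testing this against a unit vector x, after
   writing D x = (D x - m x) + m x, gives for every real m: *)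
Lemma shifted_defect_bound m x : sqnorm x = 1 ->
  - m * (Re (ipo (S x) x) + Re (ipo (X x) x))
    <= norm o (vsub o (D x) (sc (RC m) x)) * (Rabs MS + Rabs MX).
Proof.
  intros Ux. set (k := vsub o (D x) (sc (RC m) x)).
  assert (Id : ad (S (D x)) (D (X x)) = vzero o)
    by (unfold D; rewrite (linearB hH _ _ SL), SX; vec_ring hH).
  assert (Id2 : Re (ipo (ad (S (D x)) (D (X x))) x) = 0)
    by (rewrite Id, (ip0l hH); reflexivity).
  assert (Dx : D x = ad k (sc (RC m) x)) by (unfold k; vec_ring hH).
  rewrite (ipDl hH) in Id2. simpl in Id2.
  rewrite (positive_hermitian hH SL SP (D x) x), (defect_hermitian (X x) x), Dx in Id2.
  rewrite (ipDl hH), (ipDr hH), (ipZl hH), (ipZr hH) in Id2. simpl in Id2.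
  rewrite (Re_ipC hH (S x) x) in Id2.
  replace (0 * Im (ipo x (S x))) with 0 in Id2 by ring.
  replace (- 0 * Im (ipo (X x) x)) with 0 in Id2 by ring.
  pose proof (Rabs_Re_ip_le_norm hH k (S x)) as e1.
  pose proof (Rabs_Re_ip_le_norm hH (X x) k) as e2.
  pose proof (op_bound_Rabs SB x) as bS. pose proof (op_bound_Rabs XB x) as bX.
  rewrite (sqnorm_eq1_norm o x Ux) in bS, bX.
  pose proof (norm_ge0 o k). pose proof (norm_ge0 o (S x)). pose proof (norm_ge0 o (X x)).
  pose proof (Rle_abs (Re (ipo k (S x)))). pose proof (Rle_abs (Re (ipo (X x) k))).
  assert (norm o k * norm o (S x) <= norm o k * Rabs MS) by (apply Rmult_le_compat_l; lra).
  assert (norm o (X x) * norm o k <= Rabs MX * norm o k) by (apply Rmult_le_compat_r; lra).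
  lra.
Qed.

(* If <D.,.> took a negative value, take an approximate eigenvector x for the
   infimum mu < 0 of <D.,.> on the unit sphere.  The bound above then forces
   <S x,x> + <X x,x> <= -mu/4, whereas <S x,x> - <X x,x> = <D x,x> < 3mu/4
   and <S x,x> >= 0. *)
Lemma sqrt_of_square_ge x : Re (ipo (X x) x) <= Re (ipo (S x) x).
Proof.
  apply NNPP. intro Hx. apply Rnot_le_lt in Hx.
  assert (fx : Re (ipo (D x) x) < 0) by (unfold D; rewrite (ipBl hH); simpl; lra).
  destruct (approx_eigenvector hH defect_linear defect_hermitian defect_bound x fx)
    as [mu [mu_neg near]].
  set (C := Rabs MS + Rabs MX + 1).
  assert (Cp : 0 < C) by (unfold C; pose proof (Rabs_pos MS); pose proof (Rabs_pos MX); lra).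
  set (eta := mu * mu / (4 * C)).
  assert (etap : 0 < eta) by (unfold eta; apply Rdiv_lt_0_compat; nra).
  destruct (near eta (- mu / 4) etap ltac:(lra)) as [u [Uu [Fu nK]]].
  pose proof (shifted_defect_bound mu u Uu) as SD.
  pose proof (proj2 (SP u)) as a0.
  replace (Re (ipo (D u) u)) with (Re (ipo (S u) u) - Re (ipo (X u) u)) in Fu
    by (unfold D; rewrite (ipBl hH); simpl; ring).
  assert (etaC : eta * C = mu * mu / 4) by (unfold eta; field; lra).
  assert (Rabs MS + Rabs MX <= C) by (unfold C; lra).
  assert (- mu * (Re (ipo (S u) u) + Re (ipo (X u) u)) <= - mu * (- mu / 4)).
  { pose proof (norm_ge0 o (vsub o (D u) (sc (RC mu) u))). pose proof (Rabs_pos MS).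
    pose proof (Rabs_pos MX). nra. }
  assert (Re (ipo (S u) u) + Re (ipo (X u) u) <= - mu / 4)
    by (apply Rmult_le_reg_l with (- mu); lra).
  lra.
Qed.

End SquareRootDominates.

Section Convergence.
Variable H : Type.
Variable o : HOps H.
Hypothesis hH : is_CHilbert o.

Notation ad := (vadd o).
Notation sc := (vscal o).
Notation sqnorm := (sqnorm o).

Lemma norm_eq0_eq x y : norm o (vsub o x y) = 0 -> x = y.
Proof.
  intro N. apply (subv_eq0 hH), (ip_def hH).
  change (sqnorm (vsub o x y) = 0). rewrite <- (norm_sqr hH), N. ring.
Qed.

Lemma cv_unique u l1 l2 : cv_to o u l1 -> cv_to o u l2 -> l1 = l2.
Proof.
  intros C1 C2. apply norm_eq0_eq, Rle_eps_eq. intros e ep.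
  destruct (C1 (e / 2)) as [N1 h1]; [lra|]. destruct (C2 (e / 2)) as [N2 h2]; [lra|].
  specialize (h1 (max N1 N2) ltac:(lia)). specialize (h2 (max N1 N2) ltac:(lia)).
  set (w := u (max N1 N2)) in *.
  replace (vsub o l1 l2) with (vsub o (vsub o w l2) (vsub o w l1)) by vec_ring hH.
  pose proof (normB_le hH (vsub o w l2) (vsub o w l1)).
  pose proof (norm_ge0 o (vsub o (vsub o w l2) (vsub o w l1))).
  rewrite Rminus_0_r, Rabs_pos_eq by lra. lra.
Qed.

Lemma cv_add u v l m : cv_to o u l -> cv_to o v m ->
  cv_to o (fun n => ad (u n) (v n)) (ad l m).
Proof.
  intros C1 C2 e ep.
  destruct (C1 (e / 2)) as [N1 h1]; [lra|]. destruct (C2 (e / 2)) as [N2 h2]; [lra|].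
  exists (max N1 N2). intros n Hn. specialize (h1 n ltac:(lia)). specialize (h2 n ltac:(lia)).
  replace (vsub o (ad (u n) (v n)) (ad l m)) with (ad (vsub o (u n) l) (vsub o (v n) m))
    by vec_ring hH.
  pose proof (normD_le hH (vsub o (u n) l) (vsub o (v n) m)). lra.
Qed.

Lemma cv_scal a u l : cv_to o u l -> cv_to o (fun n => sc a (u n)) (sc a l).
Proof.
  intros C e ep. pose proof (sqrt_pos (Cnorm2 a)) as s0.
  destruct (C (e / (sqrt (Cnorm2 a) + 1))) as [N h]; [apply Rdiv_lt_0_compat; lra|].
  exists N. intros n Hn. specialize (h n Hn).
  replace (vsub o (sc a (u n)) (sc a l)) with (sc a (vsub o (u n) l)) by vec_ring hH.
  rewrite (normZ hH). pose proof (norm_ge0 o (vsub o (u n) l)).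
  apply Rle_lt_trans with ((sqrt (Cnorm2 a) + 1) * norm o (vsub o (u n) l)); [nra|].
  apply Rmult_lt_compat_l with (r := sqrt (Cnorm2 a) + 1) in h; [|lra].
  replace ((sqrt (Cnorm2 a) + 1) * (e / (sqrt (Cnorm2 a) + 1))) with e in h
    by (field; lra).
  exact h.
Qed.

Lemma cv_shift u l : cv_to o u l -> cv_to o (fun n => u (S n)) l.
Proof. intros C e ep. destruct (C e ep) as [N h]. exists N. intros n Hn. apply h. lia. Qed.

Lemma cv_const l : cv_to o (fun _ => l) l.
Proof.
  intros e ep. exists 0%nat. intros n _.
  replace (vsub o l l) with (vzero o) by vec_ring hH.
  unfold norm. rewrite (ip0l hH). simpl. rewrite sqrt_0. lra.
Qed.

Lemma cv_ext u v l : (forall n, u n = v n) -> cv_to o u l -> cv_to o v l.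
Proof. intros E C. replace v with u; auto. apply functional_extensionality; auto. Qed.

End Convergence.

Section PointwiseLimits.
Variable H : Type.
Variable o : HOps H.
Hypothesis hH : is_CHilbert o.

Notation ad := (vadd o).
Notation sc := (vscal o).
Notation ipo := (ip o).

Variable Tn : nat -> H -> H.
Variable T : H -> H.
Hypothesis Tn_cv : forall x, cv_to o (fun n => Tn n x) (T x).

Lemma linear_pointwise_limit : (forall n, linear_op o (Tn n)) -> linear_op o T.
Proof.
  intros L. split.
  - intros x y. apply (cv_unique hH (Tn_cv (ad x y))).
    eapply cv_ext; [|apply (cv_add hH (Tn_cv x) (Tn_cv y))].
    intro n. symmetry. apply (linearD _ _ (L n)).
  - intros a x. apply (cv_unique hH (Tn_cv (sc a x))).
    eapply cv_ext; [|apply (cv_scal hH a (Tn_cv x))].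
    intro n. symmetry. apply (linearZ _ _ (L n)).
Qed.

Lemma hermitian_pointwise_limit : (forall n, hermitian o (Tn n)) -> hermitian o T.
Proof.
  intros Hm x y. apply Cx_eps_eq. intros e ep.
  set (K := norm o x + norm o y + 1).
  assert (Kp : 0 < K) by (unfold K; pose proof (norm_ge0 o x); pose proof (norm_ge0 o y); lra).
  destruct (@Tn_cv x (e / (2 * K))) as [N1 h1]; [apply Rdiv_lt_0_compat; lra|].
  destruct (@Tn_cv y (e / (2 * K))) as [N2 h2]; [apply Rdiv_lt_0_compat; lra|].
  set (n := max N1 N2). specialize (h1 n ltac:(lia)). specialize (h2 n ltac:(lia)).
  rewrite (normB_sym hH) in h1.
  set (dx := vsub o (T x) (Tn n x)) in *. set (dy := vsub o (Tn n y) (T y)) in *.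
  assert (E : Cadd (ipo (T x) y) (Cmul (RC (-1)) (ipo x (T y))) = Cadd (ipo dx y) (ipo x dy))
    by (unfold dx, dy; rewrite (ipBl hH), (ipBr hH), (Hm n); apply Cx_eq; simpl; ring).
  (* the same estimate for the real and the imaginary part *)
  assert (F : forall f : Cx -> R, (forall a b, f (Cadd a b) = f a + f b) ->
     (forall a, f (Cmul (RC (-1)) a) = - f a) ->
     (forall u v, Rabs (f (ipo u v)) <= norm o u * norm o v) ->
     Rabs (f (ipo (T x) y) - f (ipo x (T y))) <= e).
  { intros f fA fN fB.
    replace (f (ipo (T x) y) - f (ipo x (T y))) with (f (ipo dx y) + f (ipo x dy))
      by (rewrite <- fA, <- E, fA, fN; ring).
    eapply Rle_trans; [apply Rabs_triang|].
    pose proof (fB dx y). pose proof (fB x dy).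
    pose proof (norm_ge0 o x). pose proof (norm_ge0 o y).
    pose proof (norm_ge0 o dx). pose proof (norm_ge0 o dy).
    assert (norm o dx * norm o y <= e / (2 * K) * K)
      by (apply Rmult_le_compat; try lra; unfold K; lra).
    assert (norm o x * norm o dy <= K * (e / (2 * K)))
      by (apply Rmult_le_compat; try lra; unfold K; lra).
    assert (e / (2 * K) * K = e / 2) by (field; lra).
    lra. }
  split; apply F; try reflexivity; try (intros; simpl; ring).
  - apply (Rabs_Re_ip_le_norm hH).
  - apply (Rabs_Im_ip_le_norm hH).
Qed.

Lemma cv_self_comp : (forall n, linear_op o (Tn n)) ->
  (forall n x, norm o (Tn n x) <= norm o x) ->
  forall x, cv_to o (fun n => Tn n (Tn n x)) (T (T x)).
Proof.
  intros L C x e ep.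
  destruct (@Tn_cv x (e / 2)) as [N1 h1]; [lra|].
  destruct (@Tn_cv (T x) (e / 2)) as [N2 h2]; [lra|].
  exists (max N1 N2). intros n Hn. specialize (h1 n ltac:(lia)). specialize (h2 n ltac:(lia)).
  replace (vsub o (Tn n (Tn n x)) (T (T x)))
    with (ad (Tn n (vsub o (Tn n x) (T x))) (vsub o (Tn n (T x)) (T (T x))))
    by (rewrite (linearB hH _ _ (L n)); vec_ring hH).
  eapply Rle_lt_trans; [apply (normD_le hH)|].
  pose proof (C n (vsub o (Tn n x) (T x))). lra.
Qed.

End PointwiseLimits.

(* Square root of a bounded P >= 0 (Riesz-Sz.-Nagy).  With M' >= |P|, the
   operator T = I - P/M' satisfies 0 <= T <= I.  The iterates Z_0 = 0,
   Z_(n+1) = (T + Z_n^2)/2 are polynomials in T with nonnegative coefficients,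
   and so are their successive differences; hence <Z_n x,x> increases, is
   bounded by |x|^2, and Z_n converges strongly to some Z with 2Z = T + Z^2,
   i.e. (I - Z)^2 = I - T = P/M'. *)
Section SquareRoot.
Variable H : Type.
Variable o : HOps H.
Hypothesis hH : is_CHilbert o.

Notation ad := (vadd o).
Notation sc := (vscal o).
Notation z0 := (vzero o).
Notation ipo := (ip o).
Notation sqnorm := (sqnorm o).

Variable P : H -> H.
Variable M : R.
Hypothesis PL : linear_op o P.
Hypothesis PP : positive_op o P.
Hypothesis PB : op_bound o P M.

Let M' := Rabs M + 1.
Let c := / M'.

Lemma M'_pos : 0 < M'.
Proof. unfold M'. pose proof (Rabs_pos M). lra. Qed.

Lemma P_form_le x : Re (ipo (P x) x) <= M' * sqnorm x.
Proof.
  pose proof (Re_ip_le_norm hH (P x) x). pose proof (PB x).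
  pose proof (norm_sqr hH x). pose proof (norm_ge0 o x). pose proof (Rle_abs M).
  unfold M'. nra.
Qed.

Definition sqT x := vsub o x (sc (RC c) (P x)).

Lemma sqT_linear : linear_op o sqT.
Proof.
  split; intros; unfold sqT.
  - rewrite (linearD _ _ PL). vec_ring hH.
  - rewrite (linearZ _ _ PL). vec_ring hH.
Qed.

Lemma sqT_hermitian : hermitian o sqT.
Proof.
  intros x y. unfold sqT. rewrite (ipBl hH), (ipBr hH), (ipZl hH), (ipZr hH).
  rewrite (positive_hermitian hH PL PP). apply Cx_eq; simpl; ring.
Qed.

Lemma sqT_form_ge0 x : 0 <= Re (ipo (sqT x) x).
Proof.
  unfold sqT. rewrite (ipBl hH), (ipZl hH). simpl.
  rewrite (hermitian_ip_real hH x (positive_hermitian hH PL PP)).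
  pose proof (P_form_le x). pose proof M'_pos.
  assert (c * Re (ipo (P x) x) <= sqnorm x).
  { apply Rmult_le_reg_l with M'; [lra|]. unfold c.
    rewrite <- Rmult_assoc, Rinv_r, Rmult_1_l; lra. }
  unfold sqnorm in *. lra.
Qed.

Lemma sqT_sqnorm_le x : sqnorm (sqT x) <= sqnorm x.
Proof.
  unfold sqT. rewrite (sqnormB hH), (sqnormZ hH), (ipZr hH). unfold Cnorm2; simpl.
  rewrite <- (Re_ipC hH x (P x)), (Im_ipC hH (P x) x),
    (hermitian_ip_real hH x (positive_hermitian hH PL PP)).
  pose proof (positive_sqnorm_le hH x PL PP PB) as K.
  pose proof (proj2 (PP x)) as P0. pose proof M'_pos.
  assert (cp : 0 < c) by (apply Rinv_0_lt_compat; lra).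
  assert (c * c * sqnorm (P x) <= c * Re (ipo (P x) x)).
  { assert (sqnorm (P x) <= M' * Re (ipo (P x) x)) by (unfold M' in *; nra).
    apply Rmult_le_compat_l with (r := c * c) in H1; [|nra].
    replace (c * c * (M' * Re (ipo (P x) x))) with (c * Re (ipo (P x) x)) in H1
      by (unfold c; field; lra).
    lra. }
  nra.
Qed.

Lemma sqT_norm_le x : norm o (sqT x) <= norm o x.
Proof. apply sqrt_le_1_alt, sqT_sqnorm_le. Qed.

Fixpoint sqT_pow (k : nat) (x : H) : H :=
  match k with O => x | S k => sqT (sqT_pow k x) end.

Lemma sqT_pow_linear k : linear_op o (sqT_pow k).
Proof.
  induction k; split; intros; simpl; auto.
  - rewrite (linearD _ _ IHk). apply (linearD _ _ sqT_linear).
  - rewrite (linearZ _ _ IHk). apply (linearZ _ _ sqT_linear).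
Qed.

Lemma sqT_powD k l x : sqT_pow (k + l) x = sqT_pow k (sqT_pow l x).
Proof. induction k; simpl; auto. rewrite IHk. reflexivity. Qed.

Lemma sqT_pow_comm k l x : sqT_pow k (sqT_pow l x) = sqT_pow l (sqT_pow k x).
Proof. rewrite <- !sqT_powD, Nat.add_comm. reflexivity. Qed.

Lemma sqT_pow_hermitian k : hermitian o (sqT_pow k).
Proof.
  induction k; intros x y; simpl; auto. rewrite sqT_hermitian, IHk.
  change (sqT (sqT_pow k y)) with (sqT_pow 1 (sqT_pow k y)). rewrite sqT_pow_comm. reflexivity.
Qed.

(* T^(2m) = T^m T^m and T^(2m+1) = T^m T T^m. *)
Lemma sqT_pow_form_ge0 k x : 0 <= Re (ipo (sqT_pow k x) x).
Proof.
  destruct (Nat.Even_or_Odd k) as [[m ->]|[m ->]].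
  - replace (2 * m)%nat with (m + m)%nat by lia.
    rewrite sqT_powD, sqT_pow_hermitian. apply (sqnorm_ge0 hH).
  - replace (2 * m + 1)%nat with (m + (1 + m))%nat by lia.
    rewrite sqT_powD, sqT_pow_hermitian. apply sqT_form_ge0.
Qed.

(* A polynomial in T, as a list of (coefficient, exponent) pairs. *)
Definition tpoly := list (R * nat).

Definition tpoly_eval (L : tpoly) (x : H) : H :=
  fold_right (fun p acc => ad (sc (RC (fst p)) (sqT_pow (snd p) x)) acc) z0 L.

Definition tpoly_nonneg (L : tpoly) := Forall (fun p => 0 <= fst p) L.

Definition tpoly_scale (a : R) (L : tpoly) : tpoly := map (fun p => (a * fst p, snd p)) L.

Definition tpoly_mul (L1 L2 : tpoly) : tpoly :=
  flat_map (fun p => map (fun q => (fst p * fst q, (snd p + snd q)%nat)) L2) L1.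

Lemma tpoly_eval_cat L1 L2 x : tpoly_eval (L1 ++ L2) x = ad (tpoly_eval L1 x) (tpoly_eval L2 x).
Proof.
  induction L1; simpl; [rewrite (add0v hH); auto|].
  fold (tpoly_eval (L1 ++ L2) x) (tpoly_eval L1 x). rewrite IHL1. vec_ring hH.
Qed.

Lemma tpoly_eval_linear L : linear_op o (tpoly_eval L).
Proof.
  induction L; split; intros; simpl; [vec_ring hH | vec_ring hH | |].
  - fold (tpoly_eval L (ad x y)) (tpoly_eval L x) (tpoly_eval L y).
    rewrite (linearD _ _ IHL), (linearD _ _ (sqT_pow_linear _)). vec_ring hH.
  - fold (tpoly_eval L (sc a0 x)) (tpoly_eval L x).
    rewrite (linearZ _ _ IHL), (linearZ _ _ (sqT_pow_linear _)). vec_ring hH.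
Qed.

Lemma tpoly_eval_hermitian L : hermitian o (tpoly_eval L).
Proof.
  induction L; intros x y; simpl; [rewrite (ip0l hH), (ip0r hH); reflexivity|].
  fold (tpoly_eval L x) (tpoly_eval L y).
  rewrite (ipDl hH), (ipDr hH), (ipZl hH), (ipZr hH), IHL, sqT_pow_hermitian.
  apply Cx_eq; simpl; ring.
Qed.

Lemma tpoly_eval_form_ge0 L x : tpoly_nonneg L -> 0 <= Re (ipo (tpoly_eval L x) x).
Proof.
  induction 1; simpl; [rewrite (ip0l hH); simpl; lra|].
  fold (tpoly_eval l x). rewrite (ipDl hH), (ipZl hH). simpl.
  rewrite (hermitian_ip_real hH x (sqT_pow_hermitian (snd x0))).
  pose proof (sqT_pow_form_ge0 (snd x0) x). nra.
Qed.

Lemma tpoly_eval_scale a L x : tpoly_eval (tpoly_scale a L) x = sc (RC a) (tpoly_eval L x).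
Proof.
  induction L; simpl; [vec_ring hH|].
  fold (tpoly_eval L x) (tpoly_eval (tpoly_scale a L) x). rewrite IHL. vec_ring hH.
Qed.

Lemma tpoly_eval_mul L1 L2 x : tpoly_eval (tpoly_mul L1 L2) x = tpoly_eval L1 (tpoly_eval L2 x).
Proof.
  assert (monomial : forall a k, tpoly_eval (map (fun q => (a * fst q, (k + snd q)%nat)) L2) x
                               = sc (RC a) (sqT_pow k (tpoly_eval L2 x))).
  { intros a k. induction L2; simpl.
    - rewrite (linear0 hH (sqT_pow_linear k)). vec_ring hH.
    - fold (tpoly_eval L2 x). rewrite IHL2, (linearD _ _ (sqT_pow_linear k)),
        (linearZ _ _ (sqT_pow_linear k)), sqT_powD. vec_ring hH. }
  induction L1; simpl; [reflexivity|].
  unfold tpoly_mul in *. simpl. rewrite tpoly_eval_cat, monomial, IHL1. reflexivity.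
Qed.

Lemma tpoly_nonneg_cat L1 L2 : tpoly_nonneg L1 -> tpoly_nonneg L2 -> tpoly_nonneg (L1 ++ L2).
Proof. intros; apply Forall_app; auto. Qed.

Lemma tpoly_nonneg_scale a L : 0 <= a -> tpoly_nonneg L -> tpoly_nonneg (tpoly_scale a L).
Proof.
  intros a0 N. apply Forall_map. eapply Forall_impl; [|exact N]. simpl; intros; nra.
Qed.

Lemma tpoly_nonneg_mul L1 L2 : tpoly_nonneg L1 -> tpoly_nonneg L2 -> tpoly_nonneg (tpoly_mul L1 L2).
Proof.
  intros N1 N2. apply Forall_flat_map.
  eapply Forall_impl; [|exact N1]. intros p p0. apply Forall_map.
  eapply Forall_impl; [|exact N2]. simpl; intros; nra.
Qed.

Fixpoint iter_poly (n : nat) : tpoly :=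
  match n with
  | O => nil
  | S n => (1/2, 1%nat) :: tpoly_scale (1/2) (tpoly_mul (iter_poly n) (iter_poly n))
  end.

Definition sq_iter n x := tpoly_eval (iter_poly n) x.

Lemma sq_iter_linear n : linear_op o (sq_iter n).
Proof. apply tpoly_eval_linear. Qed.

Lemma sq_iter_hermitian n : hermitian o (sq_iter n).
Proof. apply tpoly_eval_hermitian. Qed.

Lemma sq_iterS n x :
  sq_iter (S n) x = ad (sc (RC (1/2)) (sqT x)) (sc (RC (1/2)) (sq_iter n (sq_iter n x))).
Proof.
  unfold sq_iter. simpl.
  fold (tpoly_eval (tpoly_scale (1/2) (tpoly_mul (iter_poly n) (iter_poly n))) x).
  rewrite tpoly_eval_scale, tpoly_eval_mul. reflexivity.
Qed.

Lemma sq_iter_norm_le n x : norm o (sq_iter n x) <= norm o x.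
Proof.
  revert x. induction n; intro x.
  - unfold sq_iter, norm; simpl. rewrite (ip0l hH). simpl. rewrite sqrt_0. apply (norm_ge0 o).
  - rewrite sq_iterS. eapply Rle_trans; [apply (normD_le hH)|].
    rewrite !(normZ_real hH), Rabs_pos_eq by lra.
    pose proof (sqT_norm_le x). pose proof (IHn (sq_iter n x)). pose proof (IHn x). lra.
Qed.

Lemma iter_poly_nonneg n : tpoly_nonneg (iter_poly n).
Proof.
  induction n; simpl; repeat constructor; [simpl; lra|].
  apply tpoly_nonneg_scale; [lra|]. apply tpoly_nonneg_mul; auto.
Qed.

(* Z_(n+2) - Z_(n+1) = ((Z_n + L)^2 - Z_n^2)/2 = (Z_n L + L Z_n + L^2)/2
   where L = Z_(n+1) - Z_n. *)
Lemma sq_iter_incr n : exists L, tpoly_nonneg L /\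
  forall x, sq_iter (S n) x = ad (sq_iter n x) (tpoly_eval L x).
Proof.
  induction n.
  - exists ((1/2, 1%nat) :: nil). split; [repeat constructor; simpl; lra|].
    intro x. rewrite sq_iterS. unfold sq_iter; simpl. vec_ring hH.
  - destruct IHn as [L [NL EL]].
    exists (tpoly_scale (1/2) (tpoly_mul (iter_poly n) L ++ tpoly_mul L (iter_poly n)
                              ++ tpoly_mul L L)).
    split.
    + pose proof (iter_poly_nonneg n).
      apply tpoly_nonneg_scale; [lra|].
      repeat apply tpoly_nonneg_cat; apply tpoly_nonneg_mul; auto.
    + intro x. rewrite (sq_iterS (S n) x).
      set (w := sq_iter (S n) x).
      assert (W1 : w = ad (sq_iter n x) (tpoly_eval L x)) by apply EL.
      assert (W2 : w = ad (sc (RC (1/2)) (sqT x)) (sc (RC (1/2)) (sq_iter n (sq_iter n x))))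
        by apply sq_iterS.
      rewrite (EL w). rewrite W1 at 1 2. rewrite W2.
      rewrite tpoly_eval_scale, !tpoly_eval_cat, !tpoly_eval_mul. unfold sq_iter.
      rewrite (linearD _ _ (tpoly_eval_linear (iter_poly n))), (linearD _ _ (tpoly_eval_linear L)).
      vec_ring hH.
Qed.

Definition iter_form n x := Re (ipo (sq_iter n x) x).

Lemma iter_form_mono n m x : (n <= m)%nat -> iter_form n x <= iter_form m x.
Proof.
  induction 1; [lra|]. eapply Rle_trans; [exact IHle|].
  destruct (sq_iter_incr m) as [L [NL EL]]. unfold iter_form. rewrite EL, (ipDl hH). simpl.
  pose proof (tpoly_eval_form_ge0 x NL). lra.
Qed.

Lemma iter_form_le n x : iter_form n x <= sqnorm x.
Proof.
  unfold iter_form. eapply Rle_trans; [apply (Re_ip_le_norm hH)|]. rewrite <- (norm_sqr hH).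
  pose proof (sq_iter_norm_le n x). pose proof (norm_ge0 o x). pose proof (norm_ge0 o (sq_iter n x)).
  nra.
Qed.

Lemma sq_iter_diff_sqnorm n m x : (n <= m)%nat ->
  sqnorm (vsub o (sq_iter m x) (sq_iter n x)) <= 2 * (iter_form m x - iter_form n x).
Proof.
  intros nm. set (G := fun y => vsub o (sq_iter m y) (sq_iter n y)).
  assert (GL : linear_op o G).
  { split; intros; unfold G.
    - rewrite (linearD _ _ (sq_iter_linear m)), (linearD _ _ (sq_iter_linear n)). vec_ring hH.
    - rewrite (linearZ _ _ (sq_iter_linear m)), (linearZ _ _ (sq_iter_linear n)). vec_ring hH. }
  assert (GP : positive_op o G).
  { intro y. unfold G. rewrite (ipBl hH). simpl.
    rewrite (hermitian_ip_real hH y (sq_iter_hermitian m)),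
      (hermitian_ip_real hH y (sq_iter_hermitian n)).
    split; [ring|]. pose proof (iter_form_mono y nm). unfold iter_form in *. lra. }
  assert (GB : op_bound o G 2).
  { intro y. unfold G. eapply Rle_trans; [apply (normB_le hH)|].
    pose proof (sq_iter_norm_le m y). pose proof (sq_iter_norm_le n y). lra. }
  pose proof (positive_sqnorm_le hH x GL GP GB) as K. unfold G in K.
  rewrite (ipBl hH) in K. simpl in K. rewrite Rabs_pos_eq in K by lra.
  unfold iter_form. lra.
Qed.

Lemma sq_iter_cauchy x : cauchy o (fun n => sq_iter n x).
Proof.
  intros e ep.
  assert (gr : Un_growing (fun n => iter_form n x))
    by (intro n; apply iter_form_mono; lia).
  assert (ub : has_ub (fun n => iter_form n x))
    by (exists (sqnorm x); intros r [n ->]; apply iter_form_le).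
  destruct (growing_cv _ gr ub) as [l Hl].
  destruct (Hl (e * e / 4)) as [N HN]; [apply Rdiv_lt_0_compat; nra|].
  assert (K : forall p q, (p >= N)%nat -> (p <= q)%nat ->
            norm o (vsub o (sq_iter q x) (sq_iter p x)) < e).
  { intros p q Hp pq. apply sqrt_lt_sqr; auto.
    pose proof (sq_iter_diff_sqnorm x pq). specialize (HN p Hp).
    pose proof (iter_form_mono x pq). pose proof (growing_ineq _ _ gr Hl q).
    unfold Rdist in HN. apply Rabs_def2 in HN.
    change (sqnorm (vsub o (sq_iter q x) (sq_iter p x)) < e * e). lra. }
  exists N. intros n m Hn Hm. destruct (Nat.le_gt_cases n m).
  - rewrite (normB_sym hH). apply K; auto.
  - apply K; auto. lia.
Qed.

Definition sq_lim x : H :=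
  proj1_sig (constructive_indefinite_description _ (complete hH (sq_iter_cauchy x))).

Lemma sq_lim_cv x : cv_to o (fun n => sq_iter n x) (sq_lim x).
Proof. unfold sq_lim. destruct (constructive_indefinite_description _ _). auto. Qed.

Lemma sq_lim_linear : linear_op o sq_lim.
Proof. exact (linear_pointwise_limit hH _ _ sq_lim_cv sq_iter_linear). Qed.

Lemma sq_lim_fix x : sq_lim x = ad (sc (RC (1/2)) (sqT x)) (sc (RC (1/2)) (sq_lim (sq_lim x))).
Proof.
  apply (cv_unique hH (cv_shift (sq_lim_cv x))).
  eapply cv_ext; [|apply (cv_add hH (cv_const hH (sc (RC (1/2)) (sqT x)))
                     (cv_scal hH (RC (1/2))
                        (cv_self_comp hH _ _ sq_lim_cv sq_iter_linear sq_iter_norm_le x)))].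
  intro n. symmetry. apply sq_iterS.
Qed.

Definition sq_root x := sc (RC (sqrt M')) (vsub o x (sq_lim x)).

Lemma sq_root_hermitian : hermitian o sq_root.
Proof.
  intros x y. unfold sq_root.
  rewrite (ipZl hH), (ipZr hH), (ipBl hH), (ipBr hH),
    (hermitian_pointwise_limit hH _ _ sq_lim_cv sq_iter_hermitian).
  apply Cx_eq; simpl; ring.
Qed.

Lemma sq_root_sqr x : sq_root (sq_root x) = P x.
Proof.
  assert (ZZ : sq_lim (sq_lim x) = vsub o (sc (RC 2) (sq_lim x)) (sqT x)).
  { apply (vec_ext hH). intro z. pose proof (f_equal (fun v => ipo v z) (sq_lim_fix x)) as F.
    simpl in F. rewrite (ipDl hH), !(ipZl hH) in F. rewrite (ipBl hH), (ipZl hH).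
    destruct (ipo (sq_lim (sq_lim x)) z) as [a b], (ipo (sq_lim x) z) as [c1 d1],
      (ipo (sqT x) z) as [e1 f1].
    unfold Cadd, Cmul in *; simpl in *. injection F; intros. apply Cx_eq; simpl; lra. }
  unfold sq_root.
  rewrite (linearZ _ _ sq_lim_linear), (linearB hH _ _ sq_lim_linear), ZZ.
  unfold sqT.
  replace (vsub o (sc (RC (sqrt M')) (vsub o x (sq_lim x)))
             (sc (RC (sqrt M')) (vsub o (sq_lim x)
                (vsub o (sc (RC 2) (sq_lim x)) (vsub o x (sc (RC c) (P x)))))))
    with (sc (RC (sqrt M' * c)) (P x)) by vec_ring hH.
  rewrite (vscal_assoc hH).
  replace (Cmul (RC (sqrt M')) (RC (sqrt M' * c))) with Defs.C1; [apply (vscal_1 hH)|].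
  pose proof M'_pos. apply Cx_eq; simpl; [|ring].
  rewrite <- Rmult_assoc, sqrt_sqrt by lra. unfold c. field. lra.
Qed.

End SquareRoot.

Lemma positive_op_sqrt (H : Type) (o : HOps H) (hH : is_CHilbert o) (P : H -> H) M :
  linear_op o P -> positive_op o P -> op_bound o P M ->
  exists W, hermitian o W /\ forall x, W (W x) = P x.
Proof.
  intros PL PP PB. exists (sq_root hH PL PP PB).
  split; [apply sq_root_hermitian | apply sq_root_sqr].
Qed.

Definition lsum {I : Type} (f : I -> R) (l : list I) : R :=
  fold_right (fun i acc => f i + acc) 0 l.

Section ListSums.
Variable I : Type.
Implicit Types (f g : I -> R) (l : list I).

Lemma lsum_cons f i l : lsum f (i :: l) = f i + lsum f l.
Proof. reflexivity. Qed.

Lemma lsum_cat f l1 l2 : lsum f (l1 ++ l2) = lsum f l1 + lsum f l2.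
Proof.
  induction l1 as [|a l1 IH]; [simpl; ring|].
  rewrite <- app_comm_cons, !lsum_cons, IH. ring.
Qed.

Lemma lsum_ext f g l : (forall i, In i l -> f i = g i) -> lsum f l = lsum g l.
Proof.
  induction l as [|a l IH]; intros E; [reflexivity|].
  rewrite !lsum_cons, E, IH; auto using in_eq, in_cons.
Qed.

Lemma lsum_le f g l : (forall i, In i l -> f i <= g i) -> lsum f l <= lsum g l.
Proof.
  induction l as [|a l IH]; intros E; [simpl; lra|]. rewrite !lsum_cons.
  pose proof (E a (in_eq a l)). assert (lsum f l <= lsum g l) by auto using in_cons. lra.
Qed.

Lemma lsum_ge0 f l : (forall i, 0 <= f i) -> 0 <= lsum f l.
Proof.
  intros F. induction l as [|a l IH]; [simpl; lra|]. rewrite lsum_cons. specialize (F a). lra.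
Qed.

Lemma lsumD f g l : lsum (fun i => f i + g i) l = lsum f l + lsum g l.
Proof. induction l as [|a l IH]; [simpl; ring|]. rewrite !lsum_cons, IH. ring. Qed.

Lemma lsumZ (a : R) f l : lsum (fun i => a * f i) l = a * lsum f l.
Proof. induction l as [|b l IH]; [simpl; ring|]. rewrite !lsum_cons, IH. ring. Qed.

Lemma lsum_const (a : R) l : lsum (fun _ => a) l = a * INR (length l).
Proof.
  induction l as [|b l IH]; [simpl; ring|].
  rewrite lsum_cons, IH. simpl length. rewrite S_INR. ring.
Qed.

Lemma lsum_incl f l1 l2 : (forall i, 0 <= f i) ->
  NoDup l1 -> incl l1 l2 -> lsum f l1 <= lsum f l2.
Proof.
  intros F N. revert l2. induction N as [|a l1 Na N IH]; intros l2 Inc.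
  - apply lsum_ge0; auto.
  - destruct (in_split a l2 (Inc a (or_introl eq_refl))) as [l2a [l2b ->]].
    assert (lsum f l1 <= lsum f (l2a ++ l2b)).
    { apply IH. intros x Hx.
      assert (In x (l2a ++ a :: l2b)) as Hx' by (apply Inc; right; auto).
      apply in_app_or in Hx'. apply in_or_app. destruct Hx' as [h|[h|h]]; auto.
      subst; contradiction. }
    rewrite lsum_cat in *. rewrite !lsum_cons. lra.
Qed.

End ListSums.

Lemma lsum_map {I J} (f : J -> R) (g : I -> J) l : lsum f (map g l) = lsum (fun i => f (g i)) l.
Proof. induction l as [|a l IH]; [reflexivity|]. simpl map. rewrite !lsum_cons, IH. reflexivity. Qed.

Lemma lsum_swap {I J} (f : I -> J -> R) l1 l2 :
  lsum (fun i => lsum (fun j => f i j) l2) l1 = lsum (fun j => lsum (fun i => f i j) l1) l2.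
Proof.
  induction l1 as [|a l1 IH].
  - induction l2 as [|b l2 IH]; [reflexivity|]. rewrite lsum_cons, <- IH. simpl; ring.
  - rewrite lsum_cons, IH, <- lsumD. apply lsum_ext. intros j _. reflexivity.
Qed.

Lemma common_list {I X : Type} (xs : list X) (F : X -> list I -> R) :
  (forall x l1 l2, NoDup l1 -> incl l1 l2 -> F x l1 <= F x l2) ->
  (forall x, In x xs -> exists l, NoDup l /\ 0 < F x l) ->
  exists l, NoDup l /\ forall x, In x xs -> 0 < F x l.
Proof.
  intros Mono Ex. induction xs as [|x xs IH].
  - exists nil. split; [constructor | intros x []].
  - destruct IH as [l [N Hl]]; [intros; apply Ex; right; auto|].
    destruct (Ex x (or_introl eq_refl)) as [lx [Nx Hx]].
    set (dec := fun a b : I => excluded_middle_informative (a = b)).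
    assert (incl_l : incl l (nodup dec (l ++ lx)))
      by (intros i Hi; apply nodup_In, in_or_app; auto).
    assert (incl_lx : incl lx (nodup dec (l ++ lx)))
      by (intros i Hi; apply nodup_In, in_or_app; auto).
    exists (nodup dec (l ++ lx)). split; [apply NoDup_nodup|].
    intros x' [<-|Ix'].
    + apply Rlt_le_trans with (F x lx); auto.
    + apply Rlt_le_trans with (F x' l); auto.
Qed.

Lemma nested_sup_lists {I : Type} (g : I -> R) (c : R) : (forall i, 0 <= g i) ->
  (forall d, 0 < d -> exists l, NoDup l /\ c - d < lsum g l) ->
  exists L : nat -> list I, (forall n, NoDup (L n)) /\
    (forall n m, (n <= m)%nat -> incl (L n) (L m)) /\
    (forall n, c - / INR (S n) < lsum g (L n)).
Proof.
  intros g0 near.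
  assert (pick : forall n : nat, {l | NoDup l /\ c - / INR (S n) < lsum g l}).
  { intro n. apply constructive_indefinite_description, near.
    apply Rinv_0_lt_compat, lt_0_INR. lia. }
  set (dec := fun a b : I => excluded_middle_informative (a = b)).
  set (L := fix L (n : nat) : list I := match n with
            | O => proj1_sig (pick O)
            | S n => nodup dec (L n ++ proj1_sig (pick (S n))) end).
  exists L. split; [|split].
  - intros [|n]; simpl; [apply (proj2_sig (pick O)) | apply NoDup_nodup].
  - intros n m nm. induction nm; [apply incl_refl|].
    intros x Hx. simpl. apply nodup_In, in_or_app. left. auto.
  - intros [|n]; simpl; [apply (proj2_sig (pick O))|].
    destruct (proj2_sig (pick (S n))) as [N1 S1].
    eapply Rlt_le_trans; [exact S1|]. apply lsum_incl; auto.
    intros x Hx. apply nodup_In, in_or_app. right. auto.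
Qed.

Section Orthonormal.
Variable H : Type.
Variable o : HOps H.
Hypothesis hH : is_CHilbert o.

Notation ad := (vadd o).
Notation sc := (vscal o).
Notation z0 := (vzero o).
Notation ipo := (ip o).
Notation sqnorm := (sqnorm o).

Inductive orthonormal_list : list H -> Prop :=
| orthonormal_nil : orthonormal_list nil
| orthonormal_cons h hs : ipo h h = Defs.C1 -> (forall g, In g hs -> ipo g h = C0) ->
    orthonormal_list hs -> orthonormal_list (h :: hs).

Definition proj_span (hs : list H) (y : H) : H :=
  fold_right (fun h acc => ad (sc (ipo y h) h) acc) z0 hs.

Definition coef_sqsum (hs : list H) (y : H) : R := lsum (fun h => Cnorm2 (ipo y h)) hs.

Lemma orthonormal_list_sqnorm hs h : orthonormal_list hs -> In h hs -> sqnorm h = 1.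
Proof.
  induction 1 as [|h' hs E _ _ IH]; [intros []|]. intros [<-|Ih]; auto.
  unfold sqnorm. rewrite E. reflexivity.
Qed.

Lemma proj_span_orth hs y z : (forall g, In g hs -> ipo g z = C0) -> ipo (proj_span hs y) z = C0.
Proof.
  induction hs as [|h hs IH]; simpl; intros Hz; [apply (ip0l hH)|].
  rewrite (ipDl hH), (ipZl hH), Hz, IH by auto. apply Cx_eq; simpl; ring.
Qed.

Lemma proj_span_ip hs y g : orthonormal_list hs -> In g hs -> ipo (proj_span hs y) g = ipo y g.
Proof.
  intros O. induction O as [|h hs Hh Ho O IH]; simpl; [intros []|]. intros [Eg|Ig].
  - subst g. rewrite (ipDl hH), (ipZl hH), Hh, proj_span_orth by auto. apply Cx_eq; simpl; ring.
  - rewrite (ipDl hH), (ipZl hH), IH, (ipC hH g h), (Ho g Ig) by auto. apply Cx_eq; simpl; ring.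
Qed.

Lemma Re_proj_span_ip hs y z : (forall h, In h hs -> ipo h z = Cconj (ipo y h)) ->
  Re (ipo (proj_span hs y) z) = coef_sqsum hs y.
Proof.
  induction hs as [|h hs IH]; simpl; intros Hz; [rewrite (ip0l hH); reflexivity|].
  rewrite (ipDl hH), (ipZl hH), Hz by auto. simpl. rewrite IH by auto.
  unfold coef_sqsum, lsum, Cnorm2. simpl. ring.
Qed.

Lemma Re_proj_span_self hs hs' y : orthonormal_list hs' -> incl hs hs' ->
  Re (ipo (proj_span hs y) (proj_span hs' y)) = coef_sqsum hs y.
Proof.
  intros O I. apply Re_proj_span_ip. intros h Hh. rewrite (ipC hH), proj_span_ip; auto.
Qed.

Lemma sqnorm_sub_proj_span hs y : orthonormal_list hs ->
  sqnorm (vsub o y (proj_span hs y)) = sqnorm y - coef_sqsum hs y.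
Proof.
  intros O. rewrite (sqnormB hH).
  assert (A : Re (ipo (proj_span hs y) (proj_span hs y)) = coef_sqsum hs y)
    by (apply Re_proj_span_self; auto using incl_refl).
  assert (B : Re (ipo (proj_span hs y) y) = coef_sqsum hs y)
    by (apply Re_proj_span_ip; intros; apply (ipC hH)).
  unfold sqnorm at 2. rewrite A, (Re_ipC hH), B. ring.
Qed.

Lemma Bessel hs y : orthonormal_list hs -> coef_sqsum hs y <= sqnorm y.
Proof.
  intros O. pose proof (sqnorm_sub_proj_span y O).
  pose proof (sqnorm_ge0 hH (vsub o y (proj_span hs y))). lra.
Qed.

Lemma onb_orthonormal_list {I : Type} (e : I -> H) (l : list I) :
  onb o e -> NoDup l -> orthonormal_list (map e l).
Proof.
  intros [E1 [E2 _]] N. induction N; simpl; constructor; auto.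
  intros g Hg. apply in_map_iff in Hg. destruct Hg as [j [<- Hj]]. apply E2.
  intro; subst; contradiction.
Qed.

Lemma Gram_Schmidt (gs : list H) : exists hs, orthonormal_list hs /\
  (length hs <= length gs)%nat /\ forall g, In g gs -> coef_sqsum hs g = sqnorm g.
Proof.
  induction gs as [|g gs IH].
  - exists nil. split; [constructor|]. split; [simpl; lia | intros g []].
  - destruct IH as [hs [O [Le F]]].
    set (r := vsub o g (proj_span hs g)).
    assert (Br : sqnorm r = sqnorm g - coef_sqsum hs g) by (apply sqnorm_sub_proj_span; auto).
    destruct (Req_dec (sqnorm r) 0) as [R0|R0].
    { exists hs. split; auto. split; [simpl; lia|]. intros g' [<-|Ig]; auto. lra. }
    set (n := norm o r).
    assert (nn : n * n = sqnorm r) by apply (norm_sqr hH).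
    assert (np : 0 < n) by (pose proof (sqnorm_ge0 hH r); pose proof (norm_ge0 o r); unfold n in *; nra).
    set (h := sc (RC (/ n)) r).
    assert (Ir : Im (ipo r r) = 0) by apply (Im_ip_diag hH).
    assert (rorth : forall g', In g' hs -> ipo g' r = C0).
    { intros g' Ig'. unfold r. rewrite (ipBr hH), (ipC hH (proj_span hs g) g'),
        proj_span_ip, (ipC hH g' g) by auto.
      apply Cx_eq; simpl; ring. }
    assert (O' : orthonormal_list (h :: hs)).
    { constructor; auto.
      - unfold h. rewrite (ipZl hH), (ipZr hH).
        apply Cx_eq; simpl; fold (sqnorm r); rewrite Ir, <- ?nn; [field; lra | ring].
      - intros g' Ig'. unfold h. rewrite (ipZr hH), rorth by auto. apply Cx_eq; simpl; ring. }
    exists (h :: hs). split; auto. split; [simpl; lia|].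
    intros g' Ig'. unfold coef_sqsum. rewrite lsum_cons. fold (coef_sqsum hs g').
    destruct Ig' as [<-|Ig].
    + assert (E : ipo g h = RC n).
      { replace g with (ad r (proj_span hs g)) at 1 by (unfold r; vec_ring hH).
        unfold h. rewrite (ipZr hH), (ipDl hH), proj_span_orth by auto.
        apply Cx_eq; simpl; fold (sqnorm r); rewrite Ir, <- ?nn; [field; lra | ring]. }
      rewrite E. unfold Cnorm2; simpl. lra.
    + pose proof (Bessel g' O') as Bes. unfold coef_sqsum in Bes. rewrite lsum_cons in Bes.
      fold (coef_sqsum hs g') in Bes. rewrite F in * by auto.
      pose proof (Cnorm2_ge0 (ipo g' h)). lra.
Qed.

Lemma cv_ip_eventually u z w a N : cv_to o u z ->
  (forall n, (n >= N)%nat -> ipo (u n) w = a) -> ipo z w = a.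
Proof.
  intros C Ev. apply Cx_eps_eq. intros eps ep. pose proof (norm_ge0 o w).
  destruct (C (eps / (norm o w + 1))) as [N2 h2]; [apply Rdiv_lt_0_compat; lra|].
  set (n := max N N2). specialize (h2 n ltac:(lia)). rewrite (normB_sym hH) in h2.
  assert (Ez : ipo z w = Cadd (ipo (vsub o z (u n)) w) a)
    by (rewrite (ipBl hH), Ev by lia; apply Cx_eq; simpl; ring).
  pose proof (Rabs_Re_ip_le_norm hH (vsub o z (u n)) w).
  pose proof (Rabs_Im_ip_le_norm hH (vsub o z (u n)) w).
  pose proof (norm_ge0 o (vsub o z (u n))).
  assert (norm o (vsub o z (u n)) * norm o w <= eps).
  { apply Rle_trans with (eps / (norm o w + 1) * (norm o w + 1)); [|right; field; lra].
    apply Rmult_le_compat; lra. }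
  rewrite Ez. simpl. replace (Re (ipo (vsub o z (u n)) w) + Re a - Re a) with (Re (ipo (vsub o z (u n)) w)) by ring.
  replace (Im (ipo (vsub o z (u n)) w) + Im a - Im a) with (Im (ipo (vsub o z (u n)) w)) by ring.
  split; lra.
Qed.

End Orthonormal.

Section Parseval.
Variable H : Type.
Variable o : HOps H.
Hypothesis hH : is_CHilbert o.

Notation ipo := (ip o).
Notation sqnorm := (sqnorm o).

Variable I : Type.
Variable e : I -> H.
Hypothesis Oe : onb o e.
Variable y : H.

Let g i := Cnorm2 (ipo y (e i)).

Variable c : R.
Variable L : nat -> list I.
Hypothesis c_ub : forall l, NoDup l -> lsum g l <= c.
Hypothesis L_nodup : forall n, NoDup (L n).
Hypothesis L_nested : forall n m, (n <= m)%nat -> incl (L n) (L m).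
Hypothesis L_sup : forall n, c - / INR (S n) < lsum g (L n).

Let u n := proj_span o (map e (L n)) y.

Let L_orthonormal n : orthonormal_list o (map e (L n)).
Proof. apply (onb_orthonormal_list Oe), L_nodup. Qed.

Lemma sup_proj_cauchy : cauchy o u.
Proof.
  assert (D : forall n m, (n <= m)%nat -> sqnorm (vsub o (u m) (u n)) <= / INR (S n)).
  { intros n m nm.
    assert (Inm : incl (map e (L n)) (map e (L m))) by (apply incl_map, L_nested, nm).
    pose proof (Re_proj_span_self hH y (L_orthonormal m) (incl_refl _)) as A.
    pose proof (Re_proj_span_self hH y (L_orthonormal n) (incl_refl _)) as B.
    pose proof (Re_proj_span_self hH y (L_orthonormal m) Inm) as C.
    unfold coef_sqsum in A, B, C. rewrite lsum_map in A, B, C.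
    rewrite (sqnormB hH). unfold sqnorm. fold (u m) (u n) in A, B, C.
    rewrite A, B, (Re_ipC hH (u n) (u m)), C. pose proof (L_sup n). pose proof (c_ub (L_nodup m)). fold g. lra. }
  intros eps ep.
  assert (Q0 : 0 < / (eps * eps)) by (apply Rinv_0_lt_compat; nra).
  destruct (INR_unbounded (/ (eps * eps))) as [N HN].
  assert (K : forall p q, (N <= p)%nat -> (p <= q)%nat -> norm o (vsub o (u q) (u p)) < eps).
  { intros p q Np pq. apply sqrt_lt_sqr; auto.
    eapply Rle_lt_trans; [apply D; auto|].
    assert (Q : / (eps * eps) < INR (S p)) by (pose proof (le_INR N (S p) ltac:(lia)); lra).
    apply Rinv_lt_contravar in Q; [rewrite Rinv_inv in Q; exact Q|].
    apply Rmult_lt_0_compat; lra. }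
  exists N. intros n m Hn Hm. destruct (Nat.le_gt_cases n m).
  - rewrite (normB_sym hH). apply K; auto.
  - apply K; auto. lia.
Qed.

Lemma sup_proj_limit_coef z : cv_to o u z -> forall i, ipo z (e i) = ipo y (e i).
Proof.
  intros zlim i. destruct (classic (exists N, In i (L N))) as [[N HN]|NN].
  - apply (cv_ip_eventually hH (e i) (N := N) zlim). intros n Hn. unfold u.
    apply (proj_span_ip hH); [apply L_orthonormal|]. apply in_map, (L_nested Hn), HN.
  - (* i lies outside every L n, so adding it to L n shows g i <= 1/(n+1). *)
    assert (Yz : ipo y (e i) = C0).
    { apply Cnorm2_eq0, Rle_eps_eq. intros eps ep.
      rewrite Rminus_0_r, Rabs_pos_eq by apply Cnorm2_ge0.
      destruct (INR_unbounded (/ eps)) as [n Hn].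
      assert (W1 : NoDup (i :: L n)) by (constructor; auto; intro; apply NN; exists n; auto).
      pose proof (c_ub W1) as W2. rewrite lsum_cons in W2. pose proof (L_sup n).
      assert (/ INR (S n) <= eps).
      { rewrite <- (Rinv_inv eps). apply Rinv_le_contravar; [apply Rinv_0_lt_compat; auto|].
        pose proof (le_INR n (S n) ltac:(lia)). lra. }
      change (g i <= eps). lra. }
    rewrite Yz. apply (cv_ip_eventually hH (e i) (N := 0%nat) zlim). intros n _. unfold u.
    apply (proj_span_orth hH). intros h Hh. apply in_map_iff in Hh. destruct Hh as [j [<- Hj]].
    apply Oe. intro; subst. apply NN. exists n; auto.
Qed.

Lemma sqnorm_le_sup : sqnorm y <= c.
Proof.
  destruct (complete hH sup_proj_cauchy) as [z zlim].
  assert (yz : y = z).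
  { symmetry. apply (subv_eq0 hH), Oe. intro i.
    rewrite (ipBl hH), sup_proj_limit_coef by auto. apply Cx_eq; simpl; ring. }
  subst z. apply Rnot_lt_le. intro Hlt.
  destruct (zlim (sqrt (sqnorm y - c))) as [N h]; [apply sqrt_lt_R0; lra|].
  specialize (h N ltac:(lia)). rewrite (normB_sym hH) in h.
  apply sqrt_lt_0_alt in h.
  pose proof (sqnorm_sub_proj_span hH y (L_orthonormal N)) as T.
  unfold coef_sqsum in T. rewrite lsum_map in T. fold (u N) g in T.
  pose proof (c_ub (L_nodup N)). fold (sqnorm (vsub o y (u N))) in h. lra.
Qed.

End Parseval.

Lemma Parseval (H : Type) (o : HOps H) (hH : is_CHilbert o) {I : Type} (e : I -> H) y d :
  onb o e -> 0 < d ->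
  exists l, NoDup l /\ sqnorm o y - d < lsum (fun i => Cnorm2 (ip o y (e i))) l.
Proof.
  intros Oe dp. set (g := fun i => Cnorm2 (ip o y (e i))).
  set (E := fun s => exists l, NoDup l /\ s = lsum g l).
  assert (bE : bound E).
  { exists (sqnorm o y). intros s [l [N ->]].
    pose proof (Bessel hH y (onb_orthonormal_list Oe N)) as B.
    unfold coef_sqsum in B. rewrite lsum_map in B. exact B. }
  assert (nE : exists s, E s) by (exists 0; exists nil; split; [constructor | reflexivity]).
  destruct (completeness E bE nE) as [c [Cub Cleast]].
  assert (near : forall d, 0 < d -> exists l, NoDup l /\ c - d < lsum g l).
  { intros d0 d0p. apply NNPP. intro Hn.
    assert (is_upper_bound E (c - d0)).
    { intros s [l [N ->]]. apply Rnot_lt_le. intro. apply Hn. exists l. auto. }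
    apply Cleast in H0. lra. }
  assert (c_ub : forall l, NoDup l -> lsum g l <= c) by (intros l N; apply Cub; exists l; auto).
  destruct (nested_sup_lists g (fun i => Cnorm2_ge0 _) near) as [L [LN [Linc Lsup]]].
  pose proof (sqnorm_le_sup hH Oe y L c_ub LN Linc Lsup).
  destruct (near d dp) as [l [N Hl]]. exists l. split; auto. lra.
Qed.

Section TraceBounds.
Variable H : Type.
Variable o : HOps H.
Hypothesis hH : is_CHilbert o.

Notation ipo := (ip o).
Notation sqnorm := (sqnorm o).

(* With W = P^(1/2): sum_i <P e_i,e_i> = sum_i |W e_i|^2 >= sum_i sum_h |<W e_i,h>|^2
   = sum_h sum_i |<W h,e_i>|^2, and by Parseval the inner sums approach
   |W h|^2 = <P h,h> on a common finite set of indices. *)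
Lemma trace_ge_orthonormal_sum (P : H -> H) M hs s :
  linear_op o P -> positive_op o P -> op_bound o P M -> orthonormal_list o hs ->
  s <= lsum (fun h => Re (ipo (P h) h)) hs -> trace_ge o P s.
Proof.
  intros PL PP PB Ohs Hs I e Oe eps ep.
  destruct (positive_op_sqrt hH PL PP PB) as [W [WH WW]].
  set (n := INR (length hs) + 1).
  assert (np : 0 < n) by (unfold n; pose proof (pos_INR (length hs)); lra).
  set (d := eps / n).
  assert (dp : 0 < d) by (apply Rdiv_lt_0_compat; lra).
  set (coef h l := lsum (fun i => Cnorm2 (ipo (W h) (e i))) l).
  destruct (common_list hs (fun h l => coef h l - (sqnorm (W h) - d))) as [l [Nl Hl]].
  { intros h l1 l2 N12 I12. pose proof (lsum_incl (fun i => Cnorm2 (ipo (W h) (e i)))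
      (fun _ => Cnorm2_ge0 _) N12 I12). unfold coef. lra. }
  { intros h _. destruct (Parseval hH (W h) Oe dp) as [l [N Hl]]. exists l. unfold coef. split; auto. lra. }
  exists l. split; auto.
  change (s - eps < lsum (fun i => Re (ipo (P (e i)) (e i))) l).
  assert (T1 : lsum (fun i => coef_sqsum o hs (W (e i))) l
               <= lsum (fun i => Re (ipo (P (e i)) (e i))) l).
  { apply lsum_le. intros i _. rewrite <- WW, WH. apply (Bessel hH). auto. }
  assert (T2 : lsum (fun i => coef_sqsum o hs (W (e i))) l = lsum (fun h => coef h l) hs).
  { unfold coef_sqsum, coef. rewrite lsum_swap. apply lsum_ext. intros h _.
    apply lsum_ext. intros i _. rewrite WH. unfold Cnorm2. rewrite (ipC hH (e i) (W h)). simpl. ring. }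
  assert (T3 : lsum (fun h => Re (ipo (P h) h) + - d) hs <= lsum (fun h => coef h l) hs).
  { apply lsum_le. intros h Hh. specialize (Hl h Hh). rewrite <- WW, WH. fold (sqnorm (W h)). lra. }
  rewrite lsumD, lsum_const in T3.
  assert (d * INR (length hs) < eps).
  { pose proof (pos_INR (length hs)). unfold d, n.
    apply Rmult_lt_reg_r with (INR (length hs) + 1); [lra|].
    replace (eps / (INR (length hs) + 1) * INR (length hs) * (INR (length hs) + 1))
      with (eps * INR (length hs)) by (field; lra).
    nra. }
  lra.
Qed.

(* Expanding each unit vector g_j over an orthonormal basis hs of their span
   turns sum_j xi_j into a sum over hs; each h then pays 1 instead of each j. *)
Lemma frame_sum_le (g : nat -> H) (xi : nat -> R) (F : list nat) hs :
  (length hs <= length F)%nat -> (forall j, In j F -> coef_sqsum o hs (g j) = 1) ->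
  lsum (fun j => xi j - 1) F
    <= lsum (fun h => lsum (fun j => xi j * Cnorm2 (ipo h (g j))) F - 1) hs.
Proof.
  intros Len Span.
  assert (E1 : lsum (fun h => lsum (fun j => xi j * Cnorm2 (ipo h (g j))) F - 1) hs
               = lsum xi F - INR (length hs)).
  { unfold Rminus. rewrite lsumD, (lsum_const (- (1)) hs), lsum_swap.
    assert (lsum (fun j => lsum (fun h => xi j * Cnorm2 (ipo h (g j))) hs) F = lsum xi F).
    { apply lsum_ext. intros j Hj. rewrite lsumZ. rewrite <- (Rmult_1_r (xi j)) at 2.
      rewrite <- (Span j Hj). unfold coef_sqsum. f_equal.
      apply lsum_ext. intros h _. unfold Cnorm2. rewrite (ipC hH h (g j)). simpl. ring. }
    lra. }
  assert (E2 : lsum (fun j => xi j - 1) F = lsum xi F - INR (length F)).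
  { unfold Rminus. rewrite lsumD, (lsum_const (- (1)) F). ring. }
  apply le_INR in Len. lra.
Qed.

Lemma trace_ge_frame (P : H -> H) M (g : nat -> H) (xi : nat -> R) (F : list nat) :
  linear_op o P -> positive_op o P -> op_bound o P M ->
  (forall j, In j F -> sqnorm (g j) = 1) ->
  (forall x, lsum (fun j => xi j * Cnorm2 (ipo x (g j))) F - sqnorm x <= Re (ipo (P x) x)) ->
  trace_ge o P (lsum (fun j => xi j - 1) F).
Proof.
  intros PL PP PB gu PF.
  destruct (Gram_Schmidt hH (map g F)) as [hs [Ohs [Lhs Shs]]].
  rewrite length_map in Lhs.
  apply (trace_ge_orthonormal_sum PL PP PB Ohs).
  eapply Rle_trans; [apply (frame_sum_le g xi F hs Lhs)|].
  - intros j Hj. rewrite <- (gu j Hj). apply Shs, in_map, Hj.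
  - apply lsum_le. intros h Hh. specialize (PF h).
    rewrite (orthonormal_list_sqnorm h Ohs Hh) in PF. exact PF.
Qed.

End TraceBounds.

Section PositivePart.
Variable H : Type.
Variable o : HOps H.
Hypothesis hH : is_CHilbert o.

Notation ipo := (ip o).

(* X_+ = (X + |X|)/2 >= X and X_+ >= 0 both follow from |X| >= X and |X| >= -X. *)
Lemma pos_part_ge (X P : H -> H) MX :
  linear_op o X -> hermitian o X -> op_bound o X MX -> pos_part o X P ->
  linear_op o P /\ positive_op o P /\ (exists MP, op_bound o P MP) /\
    forall x, Re (ipo (X x) x) <= Re (ipo (P x) x).
Proof.
  intros XL XH XB [S [[[SL [MS SB]] [SP SS]] PE]].
  set (X' := fun x => vopp o (X x)).
  assert (X'L : linear_op o X').
  { split; intros; unfold X'.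
    - rewrite (linearD _ _ XL). vec_ring hH.
    - rewrite (linearZ _ _ XL). vec_ring hH. }
  assert (X'H : hermitian o X') by (intros x y; unfold X'; rewrite (ipNl hH), (ipNr hH), XH; reflexivity).
  assert (X'B : op_bound o X' MX) by (intro x; unfold X'; rewrite (normN hH); apply XB).
  assert (SX' : forall x, S (S x) = X' (X' x))
    by (intro x; unfold X'; rewrite (linearN hH _ XL), SS; vec_ring hH).
  pose proof (sqrt_of_square_ge hH SL SP SB XL XH XB SS) as GX.
  pose proof (sqrt_of_square_ge hH SL SP SB X'L X'H X'B SX') as GX'.
  assert (PRe : forall x, Re (ipo (P x) x) = (Re (ipo (X x) x) + Re (ipo (S x) x)) / 2)
    by (intro x; rewrite PE, (ipZl hH), (ipDl hH); simpl; field).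
  split; [|split; [|split]].
  - split; intros; rewrite !PE.
    + rewrite (linearD _ _ XL), (linearD _ _ SL). vec_ring hH.
    + rewrite (linearZ _ _ XL), (linearZ _ _ SL). vec_ring hH.
  - intro x. split.
    + rewrite PE, (ipZl hH), (ipDl hH). simpl.
      rewrite (hermitian_ip_real hH x XH), (hermitian_ip_real hH x (positive_hermitian hH SL SP)).
      ring.
    + rewrite PRe. specialize (GX' x). unfold X' in GX'. rewrite (ipNl hH) in GX'. simpl in GX'. lra.
  - exists ((Rabs MX + Rabs MS) / 2). intro x. rewrite PE, (normZ_real hH).
    pose proof (normD_le hH (X x) (S x)).
    pose proof (op_bound_Rabs XB x). pose proof (op_bound_Rabs SB x).
    rewrite Rabs_pos_eq by lra. lra.
  - intro x. rewrite PRe. specialize (GX x). lra.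
Qed.

End PositivePart.

Section Admissible.
Variable H : Type.
Variable o : HOps H.
Hypothesis hH : is_CHilbert o.

Notation ipo := (ip o).

Lemma Re_ip_cv_ge u l w a : cv_to o u l ->
  (exists N, forall n, (n >= N)%nat -> a <= Re (ipo (u n) w)) -> a <= Re (ipo l w).
Proof.
  intros C [N Ev]. apply Rnot_lt_le. intro Hlt.
  set (gap := a - Re (ipo l w)). pose proof (norm_ge0 o w).
  destruct (C (gap / (norm o w + 1))) as [N2 h2]; [apply Rdiv_lt_0_compat; unfold gap; lra|].
  set (n := max N N2). specialize (h2 n ltac:(lia)). specialize (Ev n ltac:(lia)).
  pose proof (Rabs_Re_ip_le_norm hH (vsub o (u n) l) w) as Ab.
  rewrite (ipBl hH) in Ab. simpl in Ab.
  pose proof (norm_ge0 o (vsub o (u n) l)).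
  assert (norm o (vsub o (u n) l) * norm o w < gap).
  { apply Rle_lt_trans with (gap / (norm o w + 1) * norm o w); [apply Rmult_le_compat_r; lra|].
    apply Rmult_lt_reg_r with (norm o w + 1); [lra|].
    replace (gap / (norm o w + 1) * norm o w * (norm o w + 1)) with (gap * norm o w)
      by (field; lra).
    unfold gap in *. nra. }
  pose proof (Rle_abs (Re (ipo (u n) w) + (-1 * Re (ipo l w) - 0 * Im (ipo l w)))).
  unfold gap in *. lra.
Qed.

Lemma Re_psum_ip xi Pj g n x :
  (forall j, (j < n)%nat -> forall x, Pj j x = vscal o (ipo x (g j)) (g j)) ->
  Re (ipo (psum o xi Pj n x) x) = lsum (fun j => xi j * Cnorm2 (ipo x (g j))) (seq 0 n).
Proof.
  induction n as [|n IH]; intros Hg; [simpl; rewrite (ip0l hH); reflexivity|].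
  simpl psum. rewrite seq_S, lsum_cat, (ipDl hH), (ipZl hH). simpl.
  rewrite IH by (intros; apply Hg; lia).
  rewrite (Hg n ltac:(lia)), (ipZl hH), (ipC hH x (g n)).
  unfold Cnorm2. simpl. ring.
Qed.

Lemma admissible_partial_le B len xi N : admissible o B len xi -> prefix_ok len N ->
  exists g : nat -> H, (forall j, (j < N)%nat -> sqnorm o (g j) = 1) /\
    forall F x, NoDup F -> incl F (seq 0 N) ->
      lsum (fun j => xi j * Cnorm2 (ipo x (g j))) F <= Re (ipo (B x) x).
Proof.
  intros [xi_ge0 [_ [Pj [Prk Bsum]]]] hN.
  set (g j := epsilon (inhabits (vzero o))
                (fun v => norm o v = 1 /\ forall x, Pj j x = vscal o (ipo x v) v)).
  assert (Hg : forall j, in_idx len j -> norm o (g j) = 1 /\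
                 forall x, Pj j x = vscal o (ipo x (g j)) (g j))
    by (intros j Hj; apply epsilon_spec, Prk, Hj).
  assert (idx : forall n j, prefix_ok len n -> (j < n)%nat -> in_idx len j)
    by (intros n j; destruct len; simpl; lia).
  exists g. split.
  - intros j Hj. rewrite <- (norm_sqr hH), (proj1 (Hg j (idx N j hN Hj))). ring.
  - intros F x NF IF.
    set (t j := xi j * Cnorm2 (ipo x (g j))).
    assert (Fn : forall n, (N <= n)%nat -> prefix_ok len n ->
              lsum t F <= Re (ipo (psum o xi Pj n x) x)).
    { intros n Nn hn. rewrite (Re_psum_ip xi Pj g x) by (intros j Hj; apply Hg, (idx n); auto).
      rewrite (lsum_ext t (fun j => Rabs (xi j) * Cnorm2 (ipo x (g j))) F),
        (lsum_ext (fun j => xi j * Cnorm2 (ipo x (g j))) (fun j => Rabs (xi j) * Cnorm2 (ipo x (g j)))).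
      + apply lsum_incl; auto; [intro j; pose proof (Rabs_pos (xi j)); pose proof (Cnorm2_ge0 (ipo x (g j))); nra|].
        intros j Hj. apply in_seq. apply IF, in_seq in Hj. lia.
      + intros j Hj. apply in_seq in Hj. rewrite Rabs_pos_eq; auto. apply xi_ge0, (idx n); auto; lia.
      + intros j Hj. apply IF, in_seq in Hj. rewrite Rabs_pos_eq; auto. apply xi_ge0, (idx N); auto; lia. }
    destruct len as [n|].
    + rewrite Bsum. apply Fn; simpl in *; auto.
    + apply (Re_ip_cv_ge x (Bsum x)). exists N. intros n Hn. apply Fn; simpl; auto.
Qed.

End Admissible.

Section OperatorOrder.
Variable H : Type.
Variable o : HOps H.
Hypothesis hH : is_CHilbert o.

Notation ipo := (ip o).

Lemma op_le_Re (S T : H -> H) x : op_le o S T -> Re (ipo (S x) x) <= Re (ipo (T x) x).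
Proof. intros Le. destruct (Le x) as [_ h]. unfold opsub in h. rewrite (ipBl hH) in h. simpl in h. lra. Qed.

Lemma op_le_positive (B A : H -> H) : op_le o (zeroop o) B -> op_le o B A -> positive_op o A.
Proof.
  intros h0B hBA x. destruct (hBA x) as [h1 h2], (h0B x) as [b1 b2].
  unfold opsub, zeroop in *. rewrite (ipBl hH), (ip0l hH) in *. simpl in *. split; lra.
Qed.

Lemma sub_id_properties (A : H -> H) MA : linear_op o A -> hermitian o A -> op_bound o A MA ->
  let X := opsub o A (idop (H:=H)) in
  linear_op o X /\ hermitian o X /\ op_bound o X (MA + 1).
Proof.
  intros AL AH AB X. unfold X, opsub, idop. split; [|split].
  - split; intros.
    + rewrite (linearD _ _ AL). vec_ring hH.
    + rewrite (linearZ _ _ AL). vec_ring hH.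
  - intros x y. rewrite (ipBl hH), (ipBr hH), AH. reflexivity.
  - intro x. eapply Rle_trans; [apply (normB_le hH)|]. pose proof (AB x). lra.
Qed.

End OperatorOrder.

Definition exceeds_one (r : R) : bool := if Rlt_dec 1 r then true else false.

Lemma excess_as_lsum xi N :
  excess xi N = lsum (fun j => xi j - 1) (filter (fun j => exceeds_one (xi j)) (seq 0 N)).
Proof.
  induction N as [|N IH]; [reflexivity|].
  rewrite seq_S, filter_app, lsum_cat, <- IH. simpl. unfold exceeds_one.
  destruct (Rlt_dec 1 (xi N)); simpl; rewrite ?lsum_cons; simpl; ring.
Qed.

Theorem lemma2p8 (H : Type) (o : HOps H) (hH : is_CHilbert o)
  (A B : H -> H) (hA : bounded_op o A) (hB : bounded_op o B)
  (h0B : op_le o (zeroop o) B) (hBA : op_le o B A)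
  (len : option nat) (xi : nat -> R) (hxi : admissible o B len xi)
  (P : H -> H) (hP : pos_part o (opsub o A (idop (H:=H))) P)
  (N : nat) (hN : prefix_ok len N) :
  trace_ge o P (excess xi N).
Proof.
  destruct hA as [AL [MA AB]].
  pose proof (positive_hermitian hH AL (op_le_positive hH h0B hBA)) as AH.
  destruct (sub_id_properties hH AL AH AB) as [XL [XH XB]].
  destruct (pos_part_ge hH XL XH XB hP) as [PL [PP [[MP PB] P_ge_X]]].
  destruct (admissible_partial_le hH N hxi hN) as [g [g_unit B_ge]].
  set (F := filter (fun j => exceeds_one (xi j)) (seq 0 N)).
  assert (F_seq : incl F (seq 0 N)) by (intros j Hj; apply filter_In in Hj; tauto).
  rewrite excess_as_lsum. fold F.
  apply (trace_ge_frame hH g xi F PL PP PB).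
  - intros j Hj. apply g_unit. apply F_seq, in_seq in Hj. lia.
  - intro x. pose proof (B_ge F x (NoDup_filter _ (seq_NoDup N 0)) F_seq).
    pose proof (op_le_Re hH x hBA). pose proof (P_ge_X x).
    unfold opsub, idop in *. rewrite (ipBl hH) in *. simpl in *. unfold sqnorm. lra.
Qed.
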